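(* Let $T>0$, $L>0$, $\alpha\in\mathbb{R}\setminus\{0\}$ and let $n\ge 2$ be an integer. Let $x_0>L$, $0<t_0<T$, $\beta>0$, and set $\psi(t,x)=(x-x_0)^2-\beta(t-t_0)^2$. Then there exist a constant $C>0$ and, for each $m\in\{0,\dots,n-1\}$, functions $R_m(t,x;\lambda)$ satisfying $|R_m(t,x;\lambda)|\le C\lambda^{2n-2m-3}$ for all $(t,x)\in[0,T]\times[0,L]$ and all $\lambda\ge 1$, such that for every $\lambda\ge1$ and every $v\in C_0^\infty((0,T)\times(0,L);\mathbb{R})$, with $w=e^{\lambda\psi}v$, $$\sum_{m=0}^{n-1}\int_0^T\!\!\int_0^L\Big[n^2\binom{n-1}{m}\lambda^{2n-2m-1}\psi_x^{2n-2m-2}\psi_{xx}+R_m(t,x;\lambda)\Big]|\partial_x^m w|^2\,dx\,dt\le \int_0^T\!\!\int_0^L e^{2\lambda\psi}\big|\alpha\partial_t v+\partial_x^n v\big|^2\,dx\,dt.$$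
   Context: $\binom{j}{k}$ denotes the binomial coefficient (taken to be $0$ unless $0\le k\le j$). $\psi_x,\psi_{xx}$ denote partial derivatives of $\psi$ in $x$; here $\psi_x=2(x-x_0)$, $\psi_{xx}=2$. *)

From Stdlib Require Import Reals List.
From Coquelicot Require Import Coquelicot.
Open Scope R_scope.

Definition pdt (f : R -> R -> R) : R -> R -> R :=
  fun t x => Derive (fun s => f s x) t.
Definition pdx (f : R -> R -> R) : R -> R -> R :=
  fun t x => Derive (fun y => f t y) x.

Definition pdxn (m : nat) (f : R -> R -> R) : R -> R -> R :=
  fun t x => Derive_n (fun y => f t y) m x.

(* Iterated mixed partial derivative along a word (true = d/dt, false = d/dx),
   applied from the head of the list outwards. *)
Fixpoint pdword (w : list bool) (f : R -> R -> R) : R -> R -> R :=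
  match w with
  | nil => f
  | b :: w' => if b then pdt (pdword w' f) else pdx (pdword w' f)
  end.

Definition smooth2 (f : R -> R -> R) : Prop :=
  forall w : list bool,
    forall t x : R,
      ex_derive (fun s => pdword w f s x) t /\
      ex_derive (fun y => pdword w f t y) x /\
      continuous (fun p : R * R => pdword w f (fst p) (snd p)) (t, x).

(* v in C_0^infinity((0,T) x (0,L); R): smooth with support contained in a
   compact subset [a,b] x [c,d] of the open rectangle (extended by 0). *)
Definition Cc_inf (T L : R) (v : R -> R -> R) : Prop :=
  smooth2 v /\
  exists a b c d : R,
    0 < a /\ a <= b /\ b < T /\ 0 < c /\ c <= d /\ d < L /\
    forall t x, ~ (a <= t <= b /\ c <= x <= d) -> v t x = 0.

Definition psi (x0 t0 beta : R) (t x : R) : R :=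
  (x - x0) ^ 2 - beta * (t - t0) ^ 2.

Definition psi_x (x0 : R) (x : R) : R := 2 * (x - x0).
Definition psi_xx : R := 2.

Definition dint (T L : R) (f : R -> R -> R) : R :=
  RInt (fun t => RInt (fun x => f t x) 0 L) 0 T.

From Stdlib Require Import Reals ZArith Lra Lia FunctionalExtensionality List.
From Coquelicot Require Import Coquelicot.
Open Scope R_scope.

(* Put [w = e^(lam psi) v] and [E_s f = f_x + s (x - x0) f]. Then
   [e^(lam psi) (alpha v_t + d_x^n v) = alpha (w_t - lam psi_t w) + X] with [X = E_(-2 lam)^n w],
   and its square dominates, up to two dropped squares, a form [Q] involving [X],
   [Z = E_(2 lam)^n w], [w] and [w_t]. In [Q], the term [(X^2 - Z^2)/2] is evaluated by the identity
   [int |E_s^N u|^2 = sum_m int B_(N,m,s) |u^(m)|^2] (induction on [N], integrating by parts), the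
   cross terms cancel or are time derivatives because [E_s^n] and [(-1)^n E_(-s)^n] are adjoint, and
   [-alpha^2 lam psi_t d_t |w|^2] integrates by parts in [t]. The weights [B_(N,m,s)] are
   polynomials in [s] and [s (x - x0)]; in [(B_(n,m,-2lam) - B_(n,m,2lam))/2] only odd powers of
   [s] survive, the first one giving [n^2 C(n-1,m) lam^(2n-2m-1) psi_x^(2n-2m-2) psi_xx] and the
   others [O(lam^(2n-2m-3))] on [[0,L]], where [|x - x0| <= x0]. *)

Lemma sum_f_R0_shift (f : nat -> R) (N : nat) :
  sum_f_R0 f (S N) = f 0%nat + sum_f_R0 (fun q => f (S q)) N.
Proof. now rewrite decomp_sum by lia. Qed.

Lemma sum_f_R0_eq0 (f : nat -> R) (N : nat) :
  (forall q, (q <= N)%nat -> f q = 0) -> sum_f_R0 f N = 0.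
Proof.
  induction N as [|N IH]; intros Hf; simpl; [apply Hf; lia|].
  rewrite IH, Hf by (lia || intros; apply Hf; lia); ring.
Qed.

Lemma sum_f_R0_trunc (f : nat -> R) (N M : nat) :
  (N <= M)%nat -> (forall q, (N < q <= M)%nat -> f q = 0) ->
  sum_f_R0 f M = sum_f_R0 f N.
Proof.
  induction 1 as [|M HM IH]; intros Hz; [reflexivity|].
  simpl; rewrite IH, Hz by (auto with arith || intros; apply Hz; lia); ring.
Qed.

Lemma sum_f_R0_reindex (a b c : nat -> R) (N : nat) :
  a 0%nat = 0 -> b (S N) = 0 -> c N = 0 -> c (S N) = 0 ->
  sum_f_R0 (fun m => a (S m) + b m + match m with O => 0 | S i => c i end) N
  = sum_f_R0 (fun i => a i + b i + c i) (S N).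
Proof.
  intros Ha Hb Hc HcS.
  rewrite !plus_sum, (sum_f_R0_shift a N), Ha, Rplus_0_l, (tech5 b N), Hb, Rplus_0_r.
  rewrite (sum_f_R0_trunc c N (S N)) by (lia || intros q Hq; replace q with (S N) by lia; exact HcS).
  destruct N as [|N]; [simpl; rewrite Hc; ring|].
  rewrite (sum_f_R0_shift (fun m => match m with O => 0 | S i => c i end)), (tech5 c N), Hc.
  rewrite Rplus_0_l, Rplus_0_r. reflexivity.
Qed.

(** * The expansion coefficients *)

(* [ecoef N m q] is the coefficient of [s ^ q * (s * (x - x0)) ^ (2 * (N - m - q))] in the
   weight of [|u^(m)|^2] in the expansion of [int |E_s^N u|^2], where
   [E_s u = u' + s (x - x0) u]; the recursion records one more application of [E_s],
   followed by integrations by parts (lemma [wsq_cdx_jet] below). *)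
Fixpoint ecoef (N : nat) : nat -> nat -> R :=
  match N with
  | O => fun m q => match m, q with O, O => 1 | _, _ => 0 end
  | S N' => fun m q =>
      (match m with O => 0 | S m' => ecoef N' m' q end)
      + ecoef N' m q
      + (match q with O => 0 | S q' => -(2 * INR N' - 2 * INR q + 3) * ecoef N' m q' end)
      + (match q with O | 1%nat => 0
         | S (S q') => (INR m + 1) * (3 * INR m + 2 * INR q - 2 * INR N' - 2) * ecoef N' (S m) q' end)
      + (match q with O | 1%nat | 2%nat => 0
         | S (S (S q')) => (INR m + 1) * (2 * (INR N' - INR m - INR q + 2))
                            * (2 * (INR N' - INR m - INR q + 2) - 1) * ecoef N' (S m) q' end)
  end.

Lemma ecoef_eq0 (N m q : nat) : (N < m + q)%nat -> ecoef N m q = 0.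
Proof.
  revert m q; induction N as [|N IH]; intros m q H.
  - destruct m, q; simpl; try reflexivity; lia.
  - simpl.
    assert (A1 : match m with O => 0 | S m' => ecoef N m' q end = 0)
      by (destruct m; [reflexivity|apply IH; lia]).
    assert (A3 : match q with O => 0 | S q' => -(2 * INR N - 2 * INR q + 3) * ecoef N m q' end = 0)
      by (destruct q; [reflexivity|rewrite IH by lia; ring]).
    assert (A4 : match q with O | 1%nat => 0
       | S (S q') => (INR m + 1) * (3 * INR m + 2 * INR q - 2 * INR N - 2) * ecoef N (S m) q' end = 0)
      by (destruct q as [|[|q]]; try reflexivity; rewrite IH by lia; ring).
    (* for [N = m + q - 2] the factor [N - m - q + 2] vanishes instead of [ecoef N (S m) q'] *)
    assert (A5 : match q with O | 1%nat | 2%nat => 0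
       | S (S (S q')) => (INR m + 1) * (2 * (INR N - INR m - INR q + 2))
                          * (2 * (INR N - INR m - INR q + 2) - 1) * ecoef N (S m) q' end = 0).
    { destruct q as [|[|[|q]]]; try reflexivity.
      destruct (Nat.lt_ge_cases N (S m + q)) as [Hl|Hl]; [rewrite IH by lia; ring|].
      replace (INR N) with (INR m + INR q + 1) by (replace N with (m + q + 1)%nat by lia;
        rewrite !plus_INR; reflexivity).
      rewrite !S_INR; ring. }
    rewrite A1, IH, A3, A4, A5 by lia. ring.
Qed.

Definition binom (a b : nat) : R := if (b <=? a)%nat then Binomial.C a b else 0.

Lemma binom_pascal (N m : nat) :
  binom (S N) m = (match m with O => 0 | S m' => binom N m' end) + binom N m.
Proof.
  unfold binom. destruct m as [|m].
  - simpl. rewrite !C_n_0. ring.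
  - simpl (S m <=? S N)%nat.
    destruct (Nat.leb_spec m N) as [H1|H1]; destruct (Nat.leb_spec (S m) N) as [H2|H2].
    + rewrite <- pascal by lia. reflexivity.
    + replace m with N by lia. rewrite !C_n_n. ring.
    + lia.
    + ring.
Qed.

Lemma ecoef_q0 (N m : nat) : ecoef N m 0 = binom N m.
Proof.
  revert m; induction N as [|N IH]; intros m.
  - destruct m; unfold binom; simpl; [rewrite C_n_0|]; reflexivity.
  - simpl. rewrite binom_pascal. destruct m; rewrite ?IH; ring.
Qed.

Lemma ecoef_q1 (N m : nat) : ecoef N m 1 = - INR N ^ 2 * binom (N - 1) m.
Proof.
  revert m; induction N as [|N IH]; intros m.
  - destruct m; simpl; ring.
  - simpl ecoef. rewrite !ecoef_q0. replace (S N - 1)%nat with N by lia.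
    destruct N as [|N].
    + destruct m as [|[|m]]; simpl; ring.
    + replace (S N - 1)%nat with N in IH by lia.
      rewrite (binom_pascal N m).
      destruct m as [|m]; rewrite ?IH, ?S_INR; simpl; ring.
Qed.

(** * The weight polynomials *)

(* [wpoly N m s a] is the weight of [|u^(m)|^2] evaluated at [a = s * (x - x0)];
   [wpoly'] and [wpoly''] are its first two derivatives in [a]. *)
Definition wpoly (N m : nat) (s a : R) : R :=
  sum_f_R0 (fun q => ecoef N m q * a ^ (2 * (N - m - q)) * s ^ q) N.
Definition wpoly' (N m : nat) (s a : R) : R :=
  sum_f_R0 (fun q => ecoef N m q * (INR (2 * (N - m - q)) * a ^ pred (2 * (N - m - q))) * s ^ q) N.
Definition wpoly'' (N m : nat) (s a : R) : R :=
  sum_f_R0 (fun q => ecoef N m q * (INR (2 * (N - m - q)) * (INR (pred (2 * (N - m - q)))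
                       * a ^ pred (pred (2 * (N - m - q))))) * s ^ q) N.

Lemma INR_mul_pow_pred (a : R) (k : nat) : INR k * (a * a ^ pred k) = INR k * a ^ k.
Proof. destruct k; simpl; ring. Qed.

Lemma wpoly_eq0 (N m : nat) (s a : R) : (N < m)%nat ->
  wpoly N m s a = 0 /\ wpoly' N m s a = 0 /\ wpoly'' N m s a = 0.
Proof.
  intros H; unfold wpoly, wpoly', wpoly''.
  repeat split; apply sum_f_R0_eq0; intros q _; rewrite ecoef_eq0 by lia; ring.
Qed.

Lemma wpoly_diag (N : nat) (s a : R) : wpoly N N s a = 1.
Proof.
  unfold wpoly. destruct N as [|N]; [simpl; ring|].
  rewrite sum_f_R0_shift, ecoef_q0, sum_f_R0_eq0.
  - unfold binom. rewrite Nat.leb_refl, C_n_n, Nat.sub_diag. simpl. ring.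
  - intros q _. rewrite ecoef_eq0 by lia. ring.
Qed.

Section Wpoly_recursion.
Variables (N i : nat) (s a : R).

Lemma wpoly_step_lower :
  sum_f_R0 (fun q => (match i with O => 0 | S m' => ecoef N m' q end)
                     * (a ^ (2 * (S N - i - q)) * s ^ q)) (S N)
  = match i with O => 0 | S i' => wpoly N i' s a end.
Proof.
  destruct i as [|i'].
  - apply sum_f_R0_eq0. intros; apply Rmult_0_l.
  - rewrite tech5, (ecoef_eq0 N i' (S N)) by lia.
    unfold wpoly. rewrite Rmult_0_l, Rplus_0_r. apply sum_eq. intros q _.
    cbv iota beta. replace (S N - S i')%nat with (N - i')%nat by lia. ring.
Qed.

Lemma wpoly_step_same :
  sum_f_R0 (fun q => ecoef N i q * (a ^ (2 * (S N - i - q)) * s ^ q)) (S N) = a ^ 2 * wpoly N i s a.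
Proof.
  rewrite tech5, (ecoef_eq0 N i (S N)), Rmult_0_l, Rplus_0_r by lia.
  unfold wpoly. rewrite scal_sum. apply sum_eq. intros q _.
  destruct (le_lt_dec (i + q) N) as [Hl|Hl].
  - replace (2 * (S N - i - q))%nat with (2 + 2 * (N - i - q))%nat by lia.
    rewrite pow_add. ring.
  - rewrite ecoef_eq0 by lia. ring.
Qed.

Lemma wpoly_step_first :
  sum_f_R0 (fun q => (match q with O => 0 | S q' => -(2 * INR N - 2 * INR q + 3) * ecoef N i q' end)
                     * (a ^ (2 * (S N - i - q)) * s ^ q)) (S N)
  = - s * (wpoly N i s a + a * wpoly' N i s a) - 2 * INR i * s * wpoly N i s a.
Proof.
  rewrite sum_f_R0_shift, Rmult_0_l, Rplus_0_l.
  unfold wpoly, wpoly'.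
  rewrite (scal_sum _ N a), <- plus_sum, (scal_sum _ N (- s)), (scal_sum _ N (2 * INR i * s)),
    <- minus_sum.
  apply sum_eq. intros q _.
  destruct (le_lt_dec (i + q) N) as [Hl|Hl].
  - replace (2 * (S N - i - S q))%nat with (2 * (N - i - q))%nat by lia.
    replace (ecoef N i q * (INR (2 * (N - i - q)) * a ^ pred (2 * (N - i - q))) * s ^ q * a)
      with (ecoef N i q * s ^ q * (INR (2 * (N - i - q)) * (a * a ^ pred (2 * (N - i - q))))) by ring.
    rewrite INR_mul_pow_pred, mult_INR, !minus_INR, !S_INR by lia. simpl INR. simpl pow. ring.
  - rewrite ecoef_eq0 by lia. ring.
Qed.

Lemma wpoly_step_second :
  sum_f_R0 (fun q => (match q with O | 1%nat => 0
       | S (S q') => (INR i + 1) * (3 * INR i + 2 * INR q - 2 * INR N - 2) * ecoef N (S i) q' end)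
                     * (a ^ (2 * (S N - i - q)) * s ^ q)) (S N)
  = (INR i + 1) ^ 2 * s ^ 2 * wpoly N (S i) s a
    - (INR i + 1) * s ^ 2 * (wpoly N (S i) s a + a * wpoly' N (S i) s a).
Proof.
  rewrite <- (sum_f_R0_trunc _ (S N) (S (S N))) by (lia || intros q Hq;
    replace q with (S (S N)) by lia; rewrite ecoef_eq0 by lia; ring).
  rewrite !sum_f_R0_shift, !Rmult_0_l, !Rplus_0_l.
  unfold wpoly, wpoly'.
  rewrite (scal_sum _ N a), <- plus_sum, (scal_sum _ N ((INR i + 1) * s ^ 2)),
    (scal_sum _ N ((INR i + 1) ^ 2 * s ^ 2)), <- minus_sum.
  apply sum_eq. intros q _.
  destruct (le_lt_dec (S i + q) N) as [Hl|Hl].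
  - replace (2 * (S N - i - S (S q)))%nat with (2 * (N - S i - q))%nat by lia.
    replace (ecoef N (S i) q * (INR (2 * (N - S i - q)) * a ^ pred (2 * (N - S i - q))) * s ^ q * a)
      with (ecoef N (S i) q * s ^ q * (INR (2 * (N - S i - q)) * (a * a ^ pred (2 * (N - S i - q)))))
      by ring.
    rewrite INR_mul_pow_pred, mult_INR, !minus_INR, !S_INR by lia. simpl INR. simpl pow. ring.
  - rewrite ecoef_eq0 by lia. ring.
Qed.

Lemma wpoly_step_third :
  sum_f_R0 (fun q => (match q with O | 1%nat | 2%nat => 0
       | S (S (S q')) => (INR i + 1) * (2 * (INR N - INR i - INR q + 2))
                          * (2 * (INR N - INR i - INR q + 2) - 1) * ecoef N (S i) q' end)
                     * (a ^ (2 * (S N - i - q)) * s ^ q)) (S N)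
  = (INR i + 1) * s ^ 3 * wpoly'' N (S i) s a.
Proof.
  rewrite <- (sum_f_R0_trunc _ (S N) (S (S (S N)))).
  2: lia.
  2:{ intros q Hq. destruct q as [|[|[|q]]]; try lia; try apply Rmult_0_l.
      destruct (Nat.eq_dec N (S i + q)) as [HN|HN]; [rewrite HN|rewrite ecoef_eq0 by lia; ring].
      destruct i as [|i']; [|rewrite ecoef_eq0 by lia; ring].
      rewrite !S_INR, ?plus_INR. simpl INR. ring. }
  rewrite !sum_f_R0_shift, !Rmult_0_l, !Rplus_0_l.
  unfold wpoly''. rewrite scal_sum. apply sum_eq. intros q _.
  destruct (le_lt_dec (S (S i) + q) N) as [Hl|Hl].
  - replace (2 * (S N - i - S (S (S q))))%nat with (pred (pred (2 * (N - S i - q))))%nat by lia.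
    replace (INR (pred (2 * (N - S i - q)))) with (2 * (INR N - INR i - INR q - 1) - 1).
    2:{ replace (pred (2 * (N - S i - q))) with (S (2 * (N - S (S i) - q)))%nat by lia.
        rewrite S_INR, mult_INR, !minus_INR, !S_INR by lia. simpl INR. ring. }
    rewrite mult_INR, !minus_INR, !S_INR by lia. simpl INR. simpl pow. ring.
  - destruct (le_lt_dec (S i + q) N) as [Hl2|Hl2].
    + replace N with (S i + q)%nat by lia.
      replace (S i + q - S i - q)%nat with 0%nat by lia.
      rewrite !plus_INR, !S_INR. simpl. ring.
    + rewrite ecoef_eq0 by lia. ring.
Qed.

End Wpoly_recursion.

Lemma wpoly_S (N i : nat) (s a : R) :
  wpoly (S N) i s a =
    (match i with O => 0 | S i' => wpoly N i' s a end)
    + (a ^ 2 * wpoly N i s a - s * (wpoly N i s a + a * wpoly' N i s a) - 2 * INR i * s * wpoly N i s a)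
    + ((INR i + 1) ^ 2 * s ^ 2 * wpoly N (S i) s a + (INR i + 1) * s ^ 3 * wpoly'' N (S i) s a
       - (INR i + 1) * s ^ 2 * (wpoly N (S i) s a + a * wpoly' N (S i) s a)).
Proof.
  rewrite <- wpoly_step_lower, <- wpoly_step_same, <- wpoly_step_third.
  match goal with
  |- _ = ?A + (?B - s * ?X - ?D) + (?E + ?F - ?G) =>
      transitivity (A + B + (- s * X - D) + (E - G) + F); [|ring]
  end.
  rewrite <- wpoly_step_first, <- wpoly_step_second, <- !plus_sum.
  unfold wpoly. apply sum_eq. intros q _. cbn [ecoef]. ring.
Qed.

Lemma continuous_plus_R (f g : R -> R) (x : R) :
  continuous f x -> continuous g x -> continuous (fun y => f y + g y) x.
Proof. intros; now apply (continuous_plus f g). Qed.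
Lemma continuous_minus_R (f g : R -> R) (x : R) :
  continuous f x -> continuous g x -> continuous (fun y => f y - g y) x.
Proof. intros; now apply (continuous_minus f g). Qed.
Lemma continuous_mult_R (f g : R -> R) (x : R) :
  continuous f x -> continuous g x -> continuous (fun y => f y * g y) x.
Proof. intros; now apply (continuous_mult f g). Qed.
Lemma continuous_pow_R (f : R -> R) (k : nat) (x : R) :
  continuous f x -> continuous (fun y => f y ^ k) x.
Proof.
  intros Hf; induction k; simpl; [apply continuous_const|].
  now apply (continuous_mult_R f (fun y => f y ^ k)).
Qed.
Lemma is_derive_continuous_R (f df : R -> R) (x : R) :
  (forall y, is_derive f y (df y)) -> continuous f x.
Proof. intros; apply (@ex_derive_continuous R_AbsRing R_NormedModule); eexists; eauto. Qed.

Ltac cont := repeat match goal with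
 | |- continuous (fun _ => ?c) _ => apply continuous_const
 | |- continuous (fun y => y) _ => apply continuous_id
 | |- continuous (fun y => _ - _) _ => apply continuous_minus_R
 | |- continuous (fun y => _ + _) _ => apply continuous_plus_R
 | |- continuous (fun y => _ * _) _ => apply continuous_mult_R
 | |- continuous (fun y => _ ^ _) _ => apply continuous_pow_R
 | |- _ => solve [auto]
 end.

(* Integrals land in [CompleteSpace.sort R_CompleteNormedModule]; [ring] needs the type [R]. *)
Ltac change_eq_R := match goal with |- @eq _ ?l ?r => change (@eq R l r) end.

Lemma ex_RInt_cont (f : R -> R) (a b : R) : (forall x, continuous f x) -> ex_RInt f a b.
Proof. intros; apply (@ex_RInt_continuous R_CompleteNormedModule); auto. Qed.

Lemma RInt_ext_R (f g : R -> R) (a b : R) : (forall x, f x = g x) -> RInt f a b = RInt g a b.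
Proof. intros; apply RInt_ext; auto. Qed.
Lemma RInt_plus_R (f g : R -> R) (a b : R) : ex_RInt f a b -> ex_RInt g a b ->
  RInt (fun x => f x + g x) a b = RInt f a b + RInt g a b.
Proof. intros; now apply (RInt_plus f g). Qed.
Lemma RInt_minus_R (f g : R -> R) (a b : R) : ex_RInt f a b -> ex_RInt g a b ->
  RInt (fun x => f x - g x) a b = RInt f a b - RInt g a b.
Proof. intros; now apply (RInt_minus f g). Qed.
Lemma RInt_scal_R (c : R) (f : R -> R) (a b : R) : ex_RInt f a b ->
  RInt (fun x => c * f x) a b = c * RInt f a b.
Proof. intros; now apply (RInt_scal f a b c). Qed.
Lemma is_RInt_plus_R (f g : R -> R) (a b I J : R) :
  is_RInt f a b I -> is_RInt g a b J -> is_RInt (fun y => f y + g y) a b (I + J).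
Proof. intros; now apply (is_RInt_plus f g). Qed.
Lemma is_RInt_minus_R (f g : R -> R) (a b I J : R) :
  is_RInt f a b I -> is_RInt g a b J -> is_RInt (fun y => f y - g y) a b (I - J).
Proof. intros; now apply (is_RInt_minus f g). Qed.
Lemma is_RInt_scal_R (f : R -> R) (a b k I : R) :
  is_RInt f a b I -> is_RInt (fun y => k * f y) a b (k * I).
Proof. intros; now apply (is_RInt_scal f). Qed.
Lemma is_RInt_RInt_R (f : R -> R) (a b : R) : ex_RInt f a b -> is_RInt f a b (RInt f a b).
Proof. intros; now apply (RInt_correct f). Qed.

Lemma ex_RInt_scal_R (c : R) (f : R -> R) (a b : R) : ex_RInt f a b -> ex_RInt (fun x => c * f x) a b.
Proof. intros; now apply (ex_RInt_scal f). Qed.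

Lemma RInt_eq0 (f : R -> R) (a b : R) : (forall x, f x = 0) -> RInt f a b = 0.
Proof.
  intros Hf. rewrite (RInt_ext_R _ (fun _ => 0)) by auto.
  rewrite RInt_const. unfold scal; simpl; unfold mult; simpl; ring.
Qed.

Lemma ex_RInt_sum_f_R0 (f : nat -> R -> R) (a b : R) (N : nat) :
  (forall m, ex_RInt (f m) a b) -> ex_RInt (fun t => sum_f_R0 (fun m => f m t) N) a b.
Proof.
  intros H. induction N; simpl; [apply H|].
  now apply (ex_RInt_plus (fun t => sum_f_R0 (fun m => f m t) N) (f (S N))).
Qed.

Lemma RInt_sum_f_R0 (f : nat -> R -> R) (a b : R) (N : nat) : (forall m, ex_RInt (f m) a b) ->
  RInt (fun t => sum_f_R0 (fun m => f m t) N) a b = sum_f_R0 (fun m => RInt (f m) a b) N.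
Proof.
  intros H. induction N; simpl; [reflexivity|].
  rewrite (RInt_plus_R (fun t => sum_f_R0 (fun m => f m t) N) (f (S N))), IHN; auto.
  now apply ex_RInt_sum_f_R0.
Qed.

Lemma RInt_derive_eq (F dF : R -> R) (a b : R) :
  (forall x, is_derive F x (dF x)) -> (forall x, continuous dF x) -> RInt dF a b = F b - F a.
Proof.
  intros Hd Hc.
  rewrite (is_RInt_unique _ _ _ _ (is_RInt_derive F dF a b (fun x _ => Hd x) (fun x _ => Hc x))).
  unfold minus, plus, opp; simpl; ring.
Qed.

(** * Jets in one variable *)

(* A jet [u] is the sequence of derivatives [u j = f^(j)] of a function [f = u 0]. *)
Definition is_jet (u : nat -> R -> R) : Prop := forall j x, is_derive (u j) x (u (S j) x).
Definition null_jet (L : R) (u : nat -> R -> R) : Prop :=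
  is_jet u /\ forall j, u j 0 = 0 /\ u j L = 0.

Lemma is_jet_continuous (u : nat -> R -> R) (j : nat) (x : R) : is_jet u -> continuous (u j) x.
Proof. intros Hu; exact (is_derive_continuous_R _ _ _ (Hu j)). Qed.

Lemma Derive_jet (u : nat -> R -> R) (j : nat) (x : R) :
  is_jet u -> Derive (fun y => u j y) x = u (S j) x.
Proof. intros Hu; apply is_derive_unique, Hu. Qed.

(* The jet of [E_s f = f' + s (x - x0) f], computed from the jet [u] of [f] by Leibniz' rule. *)
Definition cdx_jet (x0 s : R) (u : nat -> R -> R) : nat -> R -> R :=
  fun j x => u (S j) x + s * (x - x0) * u j x + INR j * s * u (pred j) x.

Fixpoint cdxn_jet (x0 s : R) (N : nat) (u : nat -> R -> R) : nat -> R -> R :=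
  match N with O => u | S N' => cdxn_jet x0 s N' (cdx_jet x0 s u) end.

Lemma cdxn_jet_S (x0 s : R) (N : nat) (u : nat -> R -> R) :
  cdxn_jet x0 s (S N) u = cdx_jet x0 s (cdxn_jet x0 s N u).
Proof.
  revert u; induction N as [|N IH]; intros u; [reflexivity|].
  change (cdxn_jet x0 s (S (S N)) u) with (cdxn_jet x0 s (S N) (cdx_jet x0 s u)). now rewrite IH.
Qed.

Lemma is_jet_cdx (x0 s : R) (u : nat -> R -> R) : is_jet u -> is_jet (cdx_jet x0 s u).
Proof.
  intros Hu j x. unfold cdx_jet. auto_derive.
  - repeat split; eexists; apply Hu.
  - rewrite !Derive_jet by auto. destruct j as [|j]; simpl pred; rewrite ?S_INR; simpl; ring.
Qed.

Lemma null_jet_cdxn (L x0 s : R) (N : nat) (u : nat -> R -> R) :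
  null_jet L u -> null_jet L (cdxn_jet x0 s N u).
Proof.
  revert u; induction N as [|N IH]; intros u [Hd Hb]; [now split|].
  apply IH. split; [now apply is_jet_cdx|].
  intros j; unfold cdx_jet.
  destruct (Hb (S j)) as [-> ->], (Hb j) as [-> ->], (Hb (pred j)) as [-> ->]. split; ring.
Qed.

(** * Integral identities for conjugated derivatives *)

Definition weight (N m : nat) (s x0 : R) (y : R) : R := wpoly N m s (s * (y - x0)).
Definition weight' (N m : nat) (s x0 : R) (y : R) : R := s * wpoly' N m s (s * (y - x0)).
Definition weight'' (N m : nat) (s x0 : R) (y : R) : R := s ^ 2 * wpoly'' N m s (s * (y - x0)).

Lemma is_derive_sum_f_R0 (f : nat -> R -> R) (df : nat -> R) (y : R) (N : nat) :
  (forall q, is_derive (f q) y (df q)) ->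
  is_derive (fun z => sum_f_R0 (fun q => f q z) N) y (sum_f_R0 df N).
Proof.
  intros H. induction N as [|N IH]; simpl; [apply H|].
  now apply (is_derive_plus (fun z => sum_f_R0 (fun q => f q z) N) (f (S N))).
Qed.

Lemma is_derive_monomial (c d s x0 : R) (k : nat) (y : R) :
  is_derive (fun z => c * (s * (z - x0)) ^ k * d) y (c * (INR k * s * (s * (y - x0)) ^ pred k) * d).
Proof. auto_derive; auto. replace (y + - x0) with (y - x0) by ring. ring. Qed.

Lemma is_derive_weight (N m : nat) (s x0 y : R) :
  is_derive (weight N m s x0) y (weight' N m s x0 y).
Proof.
  unfold weight, weight', wpoly, wpoly'. rewrite scal_sum.
  eapply is_derive_ext; [intros; reflexivity|].
  erewrite sum_eq; [apply is_derive_sum_f_R0; intros q; apply is_derive_monomial|].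
  intros; simpl; ring.
Qed.

Lemma is_derive_weight' (N m : nat) (s x0 y : R) :
  is_derive (weight' N m s x0) y (weight'' N m s x0 y).
Proof.
  unfold weight'', weight', wpoly'', wpoly'. rewrite (scal_sum _ N (s ^ 2)).
  apply (is_derive_ext (fun z => sum_f_R0 (fun q => (s * ecoef N m q * INR (2 * (N - m - q)))
    * (s * (z - x0)) ^ pred (2 * (N - m - q)) * s ^ q) N)).
  { intros z. rewrite scal_sum. apply sum_eq. intros; ring. }
  erewrite sum_eq; [apply is_derive_sum_f_R0; intros q; apply is_derive_monomial|].
  intros; simpl; ring.
Qed.

Lemma continuous_weight'' (N m : nat) (s x0 y : R) : continuous (weight'' N m s x0) y.
Proof.
  apply (@ex_derive_continuous R_AbsRing R_NormedModule). unfold weight'', wpoly''.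
  eexists.
  apply (is_derive_ext (fun z => sum_f_R0 (fun q => (s ^ 2 * ecoef N m q * INR (2 * (N - m - q))
    * INR (pred (2 * (N - m - q)))) * (s * (z - x0)) ^ pred (pred (2 * (N - m - q))) * s ^ q) N)).
  { intros z. rewrite scal_sum. apply sum_eq. intros; ring. }
  apply is_derive_sum_f_R0. intros q. apply is_derive_monomial.
Qed.

Lemma continuous_weight (N m : nat) (s x0 y : R) : continuous (weight N m s x0) y.
Proof. exact (is_derive_continuous_R _ _ _ (is_derive_weight N m s x0)). Qed.
Lemma continuous_weight' (N m : nat) (s x0 y : R) : continuous (weight' N m s x0) y.
Proof. exact (is_derive_continuous_R _ _ _ (is_derive_weight' N m s x0)). Qed.

Definition wsq (L : R) (f : R -> R) (u : nat -> R -> R) (j : nat) : R :=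
  RInt (fun x => f x * u j x ^ 2) 0 L.

Section Jet_integrals.
Variables (L x0 : R).

Lemma RInt_derive_null (F dF : R -> R) : (forall x, is_derive F x (dF x)) ->
  (forall x, continuous dF x) -> F 0 = 0 -> F L = 0 -> RInt dF 0 L = 0.
Proof. intros Hd Hc H0 H1. rewrite (RInt_derive_eq F dF) by auto. lra. Qed.

Lemma wsq_plus (f g : R -> R) (u : nat -> R -> R) (j : nat) : is_jet u ->
  (forall x, continuous f x) -> (forall x, continuous g x) ->
  wsq L (fun x => f x + g x) u j = wsq L f u j + wsq L g u j.
Proof.
  intros Hu Hf Hg. unfold wsq. rewrite <- RInt_plus_R.
  - apply RInt_ext_R. intros; ring.
  - apply ex_RInt_cont; intros; cont. now apply is_jet_continuous.
  - apply ex_RInt_cont; intros; cont. now apply is_jet_continuous.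
Qed.

Lemma wsq_eq0 (f : R -> R) (u : nat -> R -> R) (j : nat) : (forall x, f x = 0) -> wsq L f u j = 0.
Proof. intros Hf. apply RInt_eq0. intros x. rewrite Hf. ring. Qed.

(* Expanding [(u_(m+1) + a u_m + m s u_(m-1))^2] with [a = s (x - x0)] and integrating the
   cross terms by parts against the weight. *)
Lemma wsq_cdx_jet (s : R) (N m : nat) (u : nat -> R -> R) : null_jet L u ->
  wsq L (weight N m s x0) (cdx_jet x0 s u) m =
  wsq L (weight N m s x0) u (S m)
  + wsq L (fun x => (s * (x - x0)) ^ 2 * weight N m s x0 x
       - (s * weight N m s x0 x + s * (x - x0) * weight' N m s x0 x)
       - 2 * INR m * s * weight N m s x0 x) u m
  + wsq L (fun x => INR m ^ 2 * s ^ 2 * weight N m s x0 x + INR m * s * weight'' N m s x0 x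
       - INR m * s * (s * weight N m s x0 x + s * (x - x0) * weight' N m s x0 x)) u (pred m).
Proof.
  intros [Hd Hb]. unfold wsq.
  set (B := weight N m s x0). set (B1 := weight' N m s x0). set (B2 := weight'' N m s x0).
  assert (HB : forall y, is_derive B y (B1 y)) by apply is_derive_weight.
  assert (HB1 : forall y, is_derive B1 y (B2 y)) by apply is_derive_weight'.
  assert (cB : forall y, continuous B y) by apply continuous_weight.
  assert (cB1 : forall y, continuous B1 y) by apply continuous_weight'.
  assert (cB2 : forall y, continuous B2 y) by apply continuous_weight''.
  assert (cu : forall j x, continuous (u j) x) by (intros; now apply is_jet_continuous).
  clearbody B B1 B2.
  set (g1 := fun x => B x * u (S m) x ^ 2).
  set (g2 := fun x => ((s * (x - x0)) ^ 2 * B x - (s * B x + s * (x - x0) * B1 x)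
                       - 2 * INR m * s * B x) * u m x ^ 2).
  set (g3 := fun x => (INR m ^ 2 * s ^ 2 * B x + INR m * s * B2 x
                       - INR m * s * (s * B x + s * (x - x0) * B1 x)) * u (pred m) x ^ 2).
  (* the difference of the two sides is the derivative of a boundary-vanishing expression *)
  assert (Hnull : RInt (fun x => B x * cdx_jet x0 s u m x ^ 2 - (g1 x + g2 x + g3 x)) 0 L = 0).
  { apply (RInt_derive_null (fun x => B x * (s * (x - x0)) * u m x ^ 2
        + 2 * INR m * s * B x * u m x * u (pred m) x - INR m * s * B1 x * u (pred m) x ^ 2
        + INR m * s * B x * (s * (x - x0)) * u (pred m) x ^ 2)).
    - intros x. auto_derive.
      + assert (exu : forall j, ex_derive (u j) x) by (intros; eexists; apply Hd).
        assert (exB : ex_derive B x) by (eexists; apply HB).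
        assert (exB1 : ex_derive B1 x) by (eexists; apply HB1).
        repeat split; first [exact (exu _) | exact exB | exact exB1].
      + replace (Derive (fun y => B y) x) with (B1 x) by (symmetry; apply is_derive_unique, HB).
        replace (Derive (fun y => B1 y) x) with (B2 x) by (symmetry; apply is_derive_unique, HB1).
        rewrite !Derive_jet by auto.
        unfold g1, g2, g3, cdx_jet. destruct m as [|m']; [simpl; ring|].
        simpl pred. rewrite S_INR. ring.
    - intros x. unfold g1, g2, g3, cdx_jet. cont.
    - destruct (Hb m) as [-> _], (Hb (pred m)) as [-> _]. ring.
    - destruct (Hb m) as [_ ->], (Hb (pred m)) as [_ ->]. ring. }
  assert (Hex : forall f, (forall x, continuous f x) -> ex_RInt f 0 L) by (intros; now apply ex_RInt_cont).
  rewrite RInt_minus_R, !RInt_plus_R in Hnull; try (apply Hex; intros; unfold g1, g2, g3, cdx_jet; cont).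
  fold g1 g2 g3. lra.
Qed.

Lemma wsq_cdxn_jet (s : R) (N : nat) (u : nat -> R -> R) : null_jet L u ->
  RInt (fun x => cdxn_jet x0 s N u 0%nat x ^ 2) 0 L = sum_f_R0 (fun m => wsq L (weight N m s x0) u m) N.
Proof.
  revert u; induction N as [|N IH]; intros u Hu.
  - apply RInt_ext_R. intros x. unfold weight, wpoly. simpl. ring.
  - change (cdxn_jet x0 s (S N) u) with (cdxn_jet x0 s N (cdx_jet x0 s u)).
    rewrite IH by exact (null_jet_cdxn L x0 s 1 u Hu).
    assert (Hd := proj1 Hu).
    set (c1 := fun m x => (s * (x - x0)) ^ 2 * weight N m s x0 x
       - (s * weight N m s x0 x + s * (x - x0) * weight' N m s x0 x) - 2 * INR m * s * weight N m s x0 x).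
    set (c2 := fun m x => INR m ^ 2 * s ^ 2 * weight N m s x0 x + INR m * s * weight'' N m s x0 x
       - INR m * s * (s * weight N m s x0 x + s * (x - x0) * weight' N m s x0 x)).
    set (B := fun i x => match i with O => 0 | S i' => weight N i' s x0 x end).
    assert (cB : forall i x, continuous (B i) x)
      by (intros [|i] x; [apply continuous_const|apply continuous_weight]).
    assert (cc1 : forall m x, continuous (c1 m) x).
    { intros; unfold c1; cont; auto using continuous_weight, continuous_weight'. }
    assert (cc2 : forall m x, continuous (c2 m) x).
    { intros; unfold c2; cont; auto using continuous_weight, continuous_weight', continuous_weight''. }
    assert (Hc2 : forall m x, (N < m)%nat -> c2 m x = 0).
    { intros m x Hm. unfold c2, weight, weight', weight''.
      destruct (wpoly_eq0 N m s (s * (x - x0)) Hm) as (-> & -> & ->). ring. }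
    transitivity (sum_f_R0 (fun m => wsq L (B (S m)) u (S m) + wsq L (c1 m) u m
                    + match m with O => 0 | S i => wsq L (c2 (S i)) u i end) N).
    { apply sum_eq. intros [|m] _; rewrite wsq_cdx_jet by auto; [|reflexivity].
      rewrite (wsq_eq0 (c2 0%nat)); [reflexivity|]. intros; unfold c2; simpl; ring. }
    rewrite (sum_f_R0_reindex (fun i => wsq L (B i) u i) (fun m => wsq L (c1 m) u m)
      (fun i => wsq L (c2 (S i)) u i)).
    + apply sum_eq. intros i _. rewrite <- !wsq_plus by (auto || intros; cont).
      apply RInt_ext_R. intros x. unfold B, c1, c2, weight, weight', weight''.
      rewrite wpoly_S. destruct i as [|i]; rewrite ?S_INR; ring.
    + now apply wsq_eq0.
    + apply wsq_eq0. intros x. unfold c1, weight, weight'.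
      destruct (wpoly_eq0 N (S N) s (s * (x - x0))) as (-> & -> & _); [lia|]. ring.
    + apply wsq_eq0. intros; apply Hc2; lia.
    + apply wsq_eq0. intros; apply Hc2; lia.
Qed.

Lemma int_jet_by_parts (u v : nat -> R -> R) (i j : nat) : null_jet L u -> is_jet v ->
  RInt (fun x => u i x * v (S j) x) 0 L = - RInt (fun x => u (S i) x * v j x) 0 L.
Proof.
  intros [Hu Hbu] Hv.
  assert (H0 : RInt (fun x => u (S i) x * v j x + u i x * v (S j) x) 0 L = 0).
  { apply (RInt_derive_null (fun x => u i x * v j x)).
    - intros x. apply (is_derive_mult (u i) (v j)); auto. intros; apply Rmult_comm.
    - intros; cont; now apply is_jet_continuous.
    - destruct (Hbu i) as [-> _]; ring.
    - destruct (Hbu i) as [_ ->]; ring. }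
  rewrite RInt_plus_R in H0 by (apply ex_RInt_cont; intros; cont; now apply is_jet_continuous). lra.
Qed.

Lemma int_cdxn_jet_adjoint (s : R) (N : nat) (u v : nat -> R -> R) : null_jet L u -> null_jet L v ->
  RInt (fun x => u 0%nat x * cdxn_jet x0 s N v 0%nat x) 0 L
  = (-1) ^ N * RInt (fun x => cdxn_jet x0 (- s) N u 0%nat x * v 0%nat x) 0 L.
Proof.
  revert u v; induction N as [|N IH]; intros u v Hu Hv; [simpl; now rewrite Rmult_1_l|].
  change (cdxn_jet x0 s (S N) v) with (cdxn_jet x0 s N (cdx_jet x0 s v)).
  rewrite IH by (auto; exact (null_jet_cdxn L x0 s 1 v Hv)).
  rewrite cdxn_jet_S.
  set (U := cdxn_jet x0 (- s) N u).
  assert (HU : null_jet L U) by now apply null_jet_cdxn.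
  assert (cU : forall j x, continuous (U j) x) by (intros; apply is_jet_continuous, HU).
  assert (cv : forall j x, continuous (v j) x) by (intros; apply is_jet_continuous, Hv).
  unfold cdx_jet; simpl INR; simpl pred.
  rewrite (RInt_ext_R _ (fun x => U 0%nat x * v 1%nat x + s * (x - x0) * (U 0%nat x * v 0%nat x)))
    by (intros; ring).
  rewrite (RInt_ext_R (fun x => (U 1%nat x + - s * (x - x0) * U 0%nat x + 0 * - s * U 0%nat x) * v 0%nat x)
             (fun x => U 1%nat x * v 0%nat x + (-1) * (s * (x - x0) * (U 0%nat x * v 0%nat x))))
    by (intros; ring).
  rewrite !RInt_plus_R, (int_jet_by_parts U v 0 0), (RInt_scal_R (-1))
    by (apply HU || apply Hv || apply ex_RInt_cont; intros; cont).
  simpl; ring.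
Qed.

End Jet_integrals.

Lemma funext2 (f g : R -> R -> R) : (forall t x, f t x = g t x) -> f = g.
Proof. intros H. do 2 (apply functional_extensionality; intro). apply H. Qed.

Definition diff2 (f : R -> R -> R) : Prop :=
  forall t x, ex_derive (fun s => f s x) t /\ ex_derive (fun y => f t y) x /\ continuity_2d_pt f t x.

Lemma diff2_plus (f g : R -> R -> R) : diff2 f -> diff2 g -> diff2 (fun t x => f t x + g t x).
Proof.
  intros Hf Hg t x. destruct (Hf t x) as (a1 & a2 & a3), (Hg t x) as (b1 & b2 & b3).
  split; [|split]; [apply (ex_derive_plus (fun s => f s x) (fun s => g s x))|
    apply (ex_derive_plus (fun y => f t y) (fun y => g t y))|apply continuity_2d_pt_plus]; auto.
Qed.

Lemma diff2_mult (f g : R -> R -> R) : diff2 f -> diff2 g -> diff2 (fun t x => f t x * g t x).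
Proof.
  intros Hf Hg t x. destruct (Hf t x) as (a1 & a2 & a3), (Hg t x) as (b1 & b2 & b3).
  split; [|split]; [apply (ex_derive_mult (fun s => f s x) (fun s => g s x))|
    apply (ex_derive_mult (fun y => f t y) (fun y => g t y))|apply continuity_2d_pt_mult]; auto.
Qed.

Lemma pdt_const (c : R) : pdt (fun _ _ => c) = fun _ _ => 0.
Proof. apply funext2; intros; unfold pdt, pdx; apply Derive_const. Qed.
Lemma pdx_const (c : R) : pdx (fun _ _ => c) = fun _ _ => 0.
Proof. apply funext2; intros; unfold pdt, pdx; apply Derive_const. Qed.

Lemma pdt_plus (f g : R -> R -> R) : diff2 f -> diff2 g ->
  pdt (fun t x => f t x + g t x) = fun t x => pdt f t x + pdt g t x.
Proof.
  intros Hf Hg; apply funext2; intros t x.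
  apply Derive_plus; [exact (proj1 (Hf t x))|exact (proj1 (Hg t x))].
Qed.
Lemma pdx_plus (f g : R -> R -> R) : diff2 f -> diff2 g ->
  pdx (fun t x => f t x + g t x) = fun t x => pdx f t x + pdx g t x.
Proof.
  intros Hf Hg; apply funext2; intros t x.
  apply Derive_plus; [exact (proj1 (proj2 (Hf t x)))|exact (proj1 (proj2 (Hg t x)))].
Qed.
Lemma pdt_mult (f g : R -> R -> R) : diff2 f -> diff2 g ->
  pdt (fun t x => f t x * g t x) = fun t x => pdt f t x * g t x + f t x * pdt g t x.
Proof.
  intros Hf Hg; apply funext2; intros t x.
  apply Derive_mult; [exact (proj1 (Hf t x))|exact (proj1 (Hg t x))].
Qed.
Lemma pdx_mult (f g : R -> R -> R) : diff2 f -> diff2 g ->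
  pdx (fun t x => f t x * g t x) = fun t x => pdx f t x * g t x + f t x * pdx g t x.
Proof.
  intros Hf Hg; apply funext2; intros t x.
  apply Derive_mult; [exact (proj1 (proj2 (Hf t x)))|exact (proj1 (proj2 (Hg t x)))].
Qed.

Inductive gen_alg (G : (R -> R -> R) -> Prop) : (R -> R -> R) -> Prop :=
| gen_alg_base f : G f -> gen_alg G f
| gen_alg_const c : gen_alg G (fun _ _ => c)
| gen_alg_plus f g : gen_alg G f -> gen_alg G g -> gen_alg G (fun t x => f t x + g t x)
| gen_alg_mult f g : gen_alg G f -> gen_alg G g -> gen_alg G (fun t x => f t x * g t x).

Definition pd_stable (G : (R -> R -> R) -> Prop) : Prop :=
  forall f, G f -> diff2 f /\ gen_alg G (pdt f) /\ gen_alg G (pdx f).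

Section Generated_algebra.
Variable G : (R -> R -> R) -> Prop.
Hypothesis HS : pd_stable G.

Lemma gen_alg_pd (f : R -> R -> R) : gen_alg G f -> diff2 f /\ gen_alg G (pdt f) /\ gen_alg G (pdx f).
Proof.
  induction 1 as [f Hf|c|f g _ (Pf & Tf & Xf) _ (Pg & Tg & Xg)|f g Hf (Pf & Tf & Xf) Hg (Pg & Tg & Xg)].
  - now apply HS.
  - rewrite pdt_const, pdx_const. repeat split; try apply gen_alg_const.
    + apply ex_derive_const.
    + apply ex_derive_const.
    + apply continuity_2d_pt_const.
  - split; [now apply diff2_plus|].
    rewrite pdt_plus, pdx_plus by assumption. split; now apply gen_alg_plus.
  - split; [now apply diff2_mult|].
    rewrite pdt_mult, pdx_mult by assumption. split; apply gen_alg_plus; now apply gen_alg_mult.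
Qed.

Lemma gen_alg_diff2 (f : R -> R -> R) : gen_alg G f -> diff2 f.
Proof. intros Hf; apply (gen_alg_pd f Hf). Qed.
Lemma gen_alg_pdt (f : R -> R -> R) : gen_alg G f -> gen_alg G (pdt f).
Proof. intros Hf; apply (gen_alg_pd f Hf). Qed.
Lemma gen_alg_pdx (f : R -> R -> R) : gen_alg G f -> gen_alg G (pdx f).
Proof. intros Hf; apply (gen_alg_pd f Hf). Qed.

Lemma gen_alg_pdword (w : list bool) (f : R -> R -> R) : gen_alg G f -> gen_alg G (pdword w f).
Proof.
  revert f; induction w as [|[] w IH]; intros f Hf; simpl;
    [exact Hf|apply gen_alg_pdt|apply gen_alg_pdx]; auto.
Qed.

Lemma gen_alg_smooth2 (f : R -> R -> R) : gen_alg G f -> smooth2 f.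
Proof.
  intros Hf w t x. destruct (gen_alg_diff2 _ (gen_alg_pdword w f Hf) t x) as (a1 & a2 & a3).
  repeat split; auto. now apply continuity_2d_pt_filterlim.
Qed.

Lemma gen_alg_continuous_x (f : R -> R -> R) (t x : R) :
  gen_alg G f -> continuous (fun y => f t y) x.
Proof.
  intros Hf. apply (@ex_derive_continuous R_AbsRing R_NormedModule).
  exact (proj1 (proj2 (gen_alg_diff2 f Hf t x))).
Qed.

End Generated_algebra.

Lemma gen_alg_minus (G : (R -> R -> R) -> Prop) (f g : R -> R -> R) :
  gen_alg G f -> gen_alg G g -> gen_alg G (fun t x => f t x - g t x).
Proof.
  intros Hf Hg.
  replace (fun t x => f t x - g t x) with (fun t x => f t x + (fun _ _ => -1) t x * g t x)
    by (apply funext2; intros; ring).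
  apply gen_alg_plus; [exact Hf|]. now apply gen_alg_mult; [apply gen_alg_const|].
Qed.

Lemma gen_alg_pow (G : (R -> R -> R) -> Prop) (f : R -> R -> R) (k : nat) :
  gen_alg G f -> gen_alg G (fun t x => f t x ^ k).
Proof.
  intros Hf; induction k; simpl; [apply gen_alg_const|].
  now apply (gen_alg_mult G f (fun t x => f t x ^ k)).
Qed.

Lemma gen_alg_div (G : (R -> R -> R) -> Prop) (f : R -> R -> R) (c : R) :
  gen_alg G f -> gen_alg G (fun t x => f t x / c).
Proof. intros Hf; apply (gen_alg_mult G f (fun _ _ => / c)); [exact Hf|apply gen_alg_const]. Qed.

Lemma gen_alg_sum (G : (R -> R -> R) -> Prop) (f : nat -> R -> R -> R) (M : nat) :
  (forall q, gen_alg G (f q)) -> gen_alg G (fun t x => sum_f_R0 (fun q => f q t x) M).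
Proof.
  intros Hf; induction M; simpl; [apply Hf|].
  now apply (gen_alg_plus G (fun t x => sum_f_R0 (fun q => f q t x) M) (f (S M))).
Qed.

Lemma gen_alg_weight (G : (R -> R -> R) -> Prop) (N m : nat) (s x0 : R) :
  gen_alg G (fun _ x => x) -> gen_alg G (fun _ x => weight N m s x0 x).
Proof.
  intros Hx. unfold weight, wpoly.
  apply (gen_alg_sum G (fun q t x => ecoef N m q * (s * (x - x0)) ^ (2 * (N - m - q)) * s ^ q)).
  intros q. repeat apply gen_alg_mult; try apply gen_alg_const.
  apply (gen_alg_pow G (fun t x => s * (x - x0))), gen_alg_mult; [apply gen_alg_const|].
  now apply (gen_alg_minus G (fun _ x => x)); [|apply gen_alg_const].
Qed.

Ltac gen_alg_tac := repeat match goal with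
 | |- gen_alg _ (fun t x => _ / _) => apply gen_alg_div
 | |- gen_alg _ (fun t x => _ * _) => apply gen_alg_mult
 | |- gen_alg _ (fun t x => _ + _) => apply gen_alg_plus
 | |- gen_alg _ (fun t x => _ - _) => apply gen_alg_minus
 | |- gen_alg _ (fun t x => _ ^ _) => apply gen_alg_pow
 | |- gen_alg _ (fun t x => ?c) => apply gen_alg_const
 | |- gen_alg _ (fun t x => weight _ _ _ _ x) => apply gen_alg_weight; auto
 | |- _ => solve [auto]
 end.

Definition supported_in (a b c d : R) (f : R -> R -> R) : Prop :=
  forall t x, ~ (a <= t <= b /\ c <= x <= d) -> f t x = 0.

Section Support.
Variables (a b c d : R).

Lemma not_in_rect (t x : R) : ~ (a <= t <= b /\ c <= x <= d) -> t < a \/ b < t \/ x < c \/ d < x.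
Proof.
  intros H. destruct (Rlt_le_dec t a); auto. destruct (Rlt_le_dec b t); auto.
  destruct (Rlt_le_dec x c); auto. destruct (Rlt_le_dec d x); auto. exfalso; apply H; lra.
Qed.

(* Outside the closed rectangle [f] vanishes on a neighbourhood, so its derivatives vanish. *)
Lemma supported_in_pdt (f : R -> R -> R) : supported_in a b c d f -> supported_in a b c d (pdt f).
Proof.
  intros H t x Hn. unfold pdt. rewrite (Derive_ext_loc _ (fun _ => 0)); [apply Derive_const|].
  destruct (not_in_rect t x Hn) as [h|[h|[h|h]]].
  - generalize (open_lt a t h). apply filter_imp. intros z Hz. apply H. lra.
  - generalize (open_gt b t h). apply filter_imp. intros z Hz. apply H. lra.
  - apply filter_forall. intros z. apply H. lra.
  - apply filter_forall. intros z. apply H. lra.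
Qed.

Lemma supported_in_pdx (f : R -> R -> R) : supported_in a b c d f -> supported_in a b c d (pdx f).
Proof.
  intros H t x Hn. unfold pdx. rewrite (Derive_ext_loc _ (fun _ => 0)); [apply Derive_const|].
  destruct (not_in_rect t x Hn) as [h|[h|[h|h]]].
  - apply filter_forall. intros z. apply H. lra.
  - apply filter_forall. intros z. apply H. lra.
  - generalize (open_lt c x h). apply filter_imp. intros z Hz. apply H. lra.
  - generalize (open_gt d x h). apply filter_imp. intros z Hz. apply H. lra.
Qed.

Lemma supported_in_mult_l (f g : R -> R -> R) :
  supported_in a b c d f -> supported_in a b c d (fun t x => g t x * f t x).
Proof. intros H t x Hn. rewrite H by auto; ring. Qed.

Lemma supported_in_plus (f g : R -> R -> R) : supported_in a b c d f -> supported_in a b c d g ->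
  supported_in a b c d (fun t x => f t x + g t x).
Proof. intros Hf Hg t x Hn. rewrite Hf, Hg by auto; ring. Qed.

End Support.

(** * Conjugated derivatives in two variables *)

Definition cdx (x0 s : R) (f : R -> R -> R) : R -> R -> R :=
  fun t x => pdx f t x + s * (x - x0) * f t x.
Fixpoint cdxn (x0 s : R) (N : nat) (f : R -> R -> R) : R -> R -> R :=
  match N with O => f | S N' => cdxn x0 s N' (cdx x0 s f) end.

Definition xjet (F : R -> R -> R) (t : R) : nat -> R -> R :=
  fun j x => Derive_n (fun y => F t y) j x.

Lemma xjet_pdword (F : R -> R -> R) (t : R) (j : nat) (x : R) :
  xjet F t j x = pdword (repeat false j) F t x.
Proof.
  revert x; induction j as [|j IH]; intros x; [reflexivity|].
  simpl. unfold pdx. apply Derive_ext. intros; apply IH.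
Qed.

Lemma is_jet_xjet (F : R -> R -> R) (t : R) : smooth2 F -> is_jet (xjet F t).
Proof.
  intros HF j x. simpl. apply Derive_correct. eapply ex_derive_ext.
  - intros y. symmetry. apply xjet_pdword.
  - exact (proj1 (proj2 (HF (repeat false j) t x))).
Qed.

Lemma null_jet_xjet (L a b c d : R) (F : R -> R -> R) (t : R) : 0 < c -> d < L ->
  smooth2 F -> supported_in a b c d F -> null_jet L (xjet F t).
Proof.
  intros Hc Hd HF HS. split; [now apply is_jet_xjet|].
  assert (HSj : forall j, supported_in a b c d (pdword (repeat false j) F))
    by (induction j; simpl; auto using supported_in_pdx).
  intros j. rewrite !xjet_pdword. split; apply HSj; lra.
Qed.

Lemma xjet_cdx (x0 s : R) (F : R -> R -> R) (t : R) :
  smooth2 F -> xjet (cdx x0 s F) t = cdx_jet x0 s (xjet F t).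
Proof.
  intros HF. assert (Hj := is_jet_xjet F t HF).
  apply functional_extensionality; intro j.
  induction j as [|j IH]; apply functional_extensionality; intro x.
  - unfold xjet, cdx_jet, cdx, pdx. simpl. ring.
  - change (xjet (cdx x0 s F) t (S j) x) with (Derive (xjet (cdx x0 s F) t j) x).
    rewrite IH. now apply is_derive_unique, is_jet_cdx.
Qed.

Section Conjugated_derivatives.
Variables (G : (R -> R -> R) -> Prop) (x0 s : R).
Hypotheses (HG : pd_stable G) (Hx : gen_alg G (fun _ x => x)).

Lemma gen_alg_cdx (f : R -> R -> R) : gen_alg G f -> gen_alg G (cdx x0 s f).
Proof.
  intros Hf. unfold cdx. apply gen_alg_plus; [now apply gen_alg_pdx|].
  apply (gen_alg_mult G (fun t x => s * (x - x0)) f); [|exact Hf].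
  apply (gen_alg_mult G (fun _ _ => s) (fun t x => x - x0)); [apply gen_alg_const|].
  apply (gen_alg_minus G (fun _ x => x) (fun _ _ => x0)); [exact Hx|apply gen_alg_const].
Qed.

Lemma gen_alg_cdxn (N : nat) (f : R -> R -> R) : gen_alg G f -> gen_alg G (cdxn x0 s N f).
Proof. revert f; induction N; intros f Hf; simpl; auto using gen_alg_cdx. Qed.

Lemma xjet_cdxn (N : nat) (F : R -> R -> R) (t : R) :
  gen_alg G F -> xjet (cdxn x0 s N F) t = cdxn_jet x0 s N (xjet F t).
Proof.
  revert F; induction N as [|N IH]; intros F HF; [reflexivity|].
  simpl. rewrite IH by now apply gen_alg_cdx.
  now rewrite xjet_cdx by now apply (gen_alg_smooth2 G).
Qed.

Lemma cdxn_xjet (N : nat) (F : R -> R -> R) (t x : R) :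
  gen_alg G F -> cdxn x0 s N F t x = cdxn_jet x0 s N (xjet F t) 0%nat x.
Proof. intros HF. now rewrite <- xjet_cdxn. Qed.

End Conjugated_derivatives.

Lemma pdt_pdx (F : R -> R -> R) : smooth2 F -> pdt (pdx F) = pdx (pdt F).
Proof.
  intros HF. apply funext2. intros t x. unfold pdt, pdx.
  apply Schwarz.
  - exists (mkposreal 1 Rlt_0_1). intros u v _ _. repeat split.
    + exact (proj1 (HF nil u v)).
    + exact (proj1 (proj2 (HF nil u v))).
    + exact (proj1 (HF (false :: nil) u v)).
    + exact (proj1 (proj2 (HF (true :: nil) u v))).
  - apply continuity_2d_pt_filterlim. exact (proj2 (proj2 (HF (true :: false :: nil) t x))).
  - apply continuity_2d_pt_filterlim. exact (proj2 (proj2 (HF (false :: true :: nil) t x))).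
Qed.

Lemma pdt_cdx (x0 s : R) (F : R -> R -> R) : smooth2 F -> pdt (cdx x0 s F) = cdx x0 s (pdt F).
Proof.
  intros HF. unfold cdx. rewrite <- (pdt_pdx F HF). apply funext2. intros t x.
  unfold pdt. rewrite (Derive_plus (fun z => pdx F z x) (fun z => s * (x - x0) * F z x)).
  - now rewrite Derive_scal.
  - exact (proj1 (HF (false :: nil) t x)).
  - apply ex_derive_scal. exact (proj1 (HF nil t x)).
Qed.

Lemma pdt_cdxn (G : (R -> R -> R) -> Prop) (x0 s : R) (N : nat) (F : R -> R -> R) :
  pd_stable G -> gen_alg G (fun _ x => x) -> gen_alg G F -> pdt (cdxn x0 s N F) = cdxn x0 s N (pdt F).
Proof.
  intros HG Hx. revert F; induction N as [|N IH]; intros F HF; [reflexivity|].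
  simpl. rewrite IH by now apply gen_alg_cdx.
  now rewrite pdt_cdx by now apply (gen_alg_smooth2 G).
Qed.

Section Space_integrals.
Variables (G : (R -> R -> R) -> Prop) (L : R).
Hypothesis HG : pd_stable G.

Lemma ex_RInt_x (g : R -> R -> R) (t : R) : gen_alg G g -> ex_RInt (fun x => g t x) 0 L.
Proof. intros Hg. apply ex_RInt_cont. intros x. now apply (gen_alg_continuous_x G). Qed.

Lemma is_derive_RInt_x (g : R -> R -> R) (t : R) : gen_alg G g ->
  is_derive (fun t => RInt (fun x => g t x) 0 L) t (RInt (fun x => pdt g t x) 0 L).
Proof.
  intros Hg.
  assert (Pg := gen_alg_diff2 G HG g Hg).
  assert (Pg' := gen_alg_diff2 G HG (pdt g) (gen_alg_pdt G HG g Hg)).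
  apply (is_derive_RInt_param g 0 L t).
  - apply filter_forall. intros t' x _. exact (proj1 (Pg t' x)).
  - intros x _. exact (proj2 (proj2 (Pg' t x))).
  - apply filter_forall. intros y. now apply ex_RInt_x.
Qed.

Lemma continuous_RInt_x (g : R -> R -> R) (t : R) : gen_alg G g ->
  continuous (fun t => RInt (fun x => g t x) 0 L) t.
Proof.
  intros Hg. apply (@ex_derive_continuous R_AbsRing R_NormedModule). eexists.
  now apply is_derive_RInt_x.
Qed.

Lemma ex_RInt_RInt_x (g : R -> R -> R) (T : R) : gen_alg G g ->
  ex_RInt (fun t => RInt (fun x => g t x) 0 L) 0 T.
Proof. intros Hg. apply ex_RInt_cont. intros; now apply continuous_RInt_x. Qed.

Lemma RInt_pdt_RInt_x_null (g : R -> R -> R) (T : R) : gen_alg G g ->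
  (forall x, g 0 x = 0) -> (forall x, g T x = 0) ->
  RInt (fun t => RInt (fun x => pdt g t x) 0 L) 0 T = 0.
Proof.
  intros Hg H0 HT.
  rewrite (RInt_derive_eq (fun t => RInt (fun x => g t x) 0 L)).
  - rewrite !RInt_eq0 by auto. change_eq_R. ring.
  - intros t. now apply is_derive_RInt_x.
  - intros t. now apply continuous_RInt_x, gen_alg_pdt.
Qed.

Lemma RInt_mult_pdt_RInt_x (p : R -> R) (k : R) (h : R -> R -> R) (T : R) : gen_alg G h ->
  (forall t, is_derive p t k) -> (forall x, h 0 x = 0) -> (forall x, h T x = 0) ->
  RInt (fun t => p t * RInt (fun x => pdt h t x) 0 L) 0 T
  = - k * RInt (fun t => RInt (fun x => h t x) 0 L) 0 T.
Proof.
  intros Hh Hp H0 HT.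
  set (K := fun t => RInt (fun x => h t x) 0 L).
  set (K' := fun t => RInt (fun x => pdt h t x) 0 L).
  assert (cp : forall t, continuous p t) by (intros; apply (is_derive_continuous_R _ (fun _ => k)); auto).
  assert (cK : forall t, continuous K t) by (intros; now apply continuous_RInt_x).
  assert (cK' : forall t, continuous K' t) by (intros; now apply continuous_RInt_x, gen_alg_pdt).
  assert (HK0 : K 0 = 0) by (apply RInt_eq0; auto).
  assert (HKT : K T = 0) by (apply RInt_eq0; auto).
  assert (Hder : forall t, is_derive (fun t => p t * K t) t (k * K t + p t * K' t)).
  { intros t. evar (l : R). replace (k * K t + p t * K' t) with l.
    + apply (is_derive_mult p K); auto.
      * now apply is_derive_RInt_x.
      * intros; apply Rmult_comm.
    + subst l. unfold plus, mult, K'; simpl. ring. }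
  assert (F0 := RInt_derive_eq _ _ 0 T Hder (fun t => ltac:(cont))).
  cbv beta in F0.
  rewrite HK0, HKT, RInt_plus_R, RInt_scal_R in F0 by (apply ex_RInt_cont; intros; cont).
  change (RInt (fun t => p t * K' t) 0 T = - k * RInt K 0 T). lra.
Qed.

End Space_integrals.

(* Multiplying by [e] with [e' = -c (y - x0) e] conjugates [d/dy] into [E_(-c)]. *)
Lemma Derive_n_mult_exp (x0 c : R) (e : R -> R) (u : nat -> R -> R) (N : nat) (y : R) :
  (forall y, is_derive e y (- (c * (y - x0)) * e y)) -> is_jet u ->
  Derive_n (fun z => e z * u 0%nat z) N y = e y * cdxn_jet x0 (- c) N u 0%nat y.
Proof.
  intros He. revert u y; induction N as [|N IH]; intros u y Hu; [reflexivity|].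
  replace (S N) with (N + 1)%nat by lia. rewrite <- Derive_n_comp.
  rewrite (Derive_n_ext (Derive_n (fun z => e z * u 0%nat z) 1) (fun z => e z * cdx_jet x0 (- c) u 0%nat z)).
  - rewrite IH by now apply is_jet_cdx. now replace (N + 1)%nat with (S N) by lia.
  - intros z. simpl. apply is_derive_unique.
    evar (l : R). replace (e z * cdx_jet x0 (- c) u 0 z) with l.
    + apply (is_derive_mult e (u 0%nat)); auto. intros; apply Rmult_comm.
    + subst l. unfold cdx_jet. simpl. unfold plus, mult; simpl. ring.
Qed.

(** * The Carleman weight *)

Definition cweight (lam x0 t0 beta : R) : R -> R -> R := fun t x => exp (lam * psi x0 t0 beta t x).

Definition lam_psi_t (lam t0 beta t : R) : R := - 2 * lam * beta * (t - t0).

Lemma pdt_cweight (lam x0 t0 beta : R) :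
  pdt (cweight lam x0 t0 beta) = fun t x => cweight lam x0 t0 beta t x * lam_psi_t lam t0 beta t.
Proof.
  apply funext2; intros t x; unfold pdt, lam_psi_t. apply is_derive_unique.
  unfold cweight at 1, psi. auto_derive; auto.
  match goal with |- context [exp ?A] => replace (exp A) with (cweight lam x0 t0 beta t x)
    by (unfold cweight, psi; f_equal; ring) end.
  ring.
Qed.

Lemma pdx_cweight (lam x0 t0 beta : R) :
  pdx (cweight lam x0 t0 beta) = fun t x => cweight lam x0 t0 beta t x * (2 * lam * (x - x0)).
Proof.
  apply funext2; intros t x; unfold pdx. apply is_derive_unique.
  unfold cweight at 1, psi. auto_derive; auto.
  match goal with |- context [exp ?A] => replace (exp A) with (cweight lam x0 t0 beta t x)
    by (unfold cweight, psi; f_equal; ring) end.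
  ring.
Qed.

Lemma diff2_cweight (lam x0 t0 beta : R) : diff2 (cweight lam x0 t0 beta).
Proof.
  intros t x. unfold cweight, psi. split; [|split]; [auto_derive; auto|auto_derive; auto|].
  apply (continuity_1d_2d_pt_comp exp (fun t x => lam * ((x - x0) ^ 2 - beta * (t - t0) ^ 2))).
  - apply continuity_pt_filterlim, (@ex_derive_continuous R_AbsRing R_NormedModule).
    auto_derive; auto.
  - apply continuity_2d_pt_mult; [apply continuity_2d_pt_const|].
    apply continuity_2d_pt_minus.
    + apply (continuity_2d_pt_ext (fun t x => (x - x0) * (x - x0))); [intros; simpl; ring|].
      apply continuity_2d_pt_mult; apply continuity_2d_pt_minus;
        (apply continuity_2d_pt_id2 || apply continuity_2d_pt_const).
    + apply (continuity_2d_pt_ext (fun t x => beta * ((t - t0) * (t - t0)))); [intros; simpl; ring|].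
      apply continuity_2d_pt_mult; [apply continuity_2d_pt_const|].
      apply continuity_2d_pt_mult; apply continuity_2d_pt_minus;
        (apply continuity_2d_pt_id1 || apply continuity_2d_pt_const).
Qed.

(* Every function occurring in the argument is built from these: the partial derivatives of
   [v], the coordinates and the weight. *)
Definition carleman_gens (lam x0 t0 beta : R) (v : R -> R -> R) (f : R -> R -> R) : Prop :=
  (exists w, f = pdword w v) \/ f = (fun _ x => x) \/ f = (fun t _ => t) \/ f = cweight lam x0 t0 beta.

Lemma pd_stable_carleman_gens (lam x0 t0 beta : R) (v : R -> R -> R) :
  smooth2 v -> pd_stable (carleman_gens lam x0 t0 beta v).
Proof.
  intros Hv f [[w ->]|[->|[->| ->]]].
  - split; [|split].
    + intros t x. destruct (Hv w t x) as (a1 & a2 & a3). repeat split; auto.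
      now apply continuity_2d_pt_filterlim.
    + apply gen_alg_base. left. now exists (true :: w).
    + apply gen_alg_base. left. now exists (false :: w).
  - split; [|split].
    + intros t x. repeat split; [apply ex_derive_const|apply ex_derive_id|apply continuity_2d_pt_id2].
    + replace (pdt (fun _ x => x)) with (fun _ _ : R => 0); [apply gen_alg_const|].
      apply funext2; intros; unfold pdt; now rewrite Derive_const.
    + replace (pdx (fun _ x => x)) with (fun _ _ : R => 1); [apply gen_alg_const|].
      apply funext2; intros; unfold pdx. symmetry. apply (Derive_id x).
  - split; [|split].
    + intros t x. repeat split; [apply ex_derive_id|apply ex_derive_const|apply continuity_2d_pt_id1].
    + replace (pdt (fun t _ => t)) with (fun _ _ : R => 1); [apply gen_alg_const|].
      apply funext2; intros; unfold pdt. symmetry. apply (Derive_id t).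
    + replace (pdx (fun t _ => t)) with (fun _ _ : R => 0); [apply gen_alg_const|].
      apply funext2; intros; unfold pdx; now rewrite Derive_const.
  - assert (Hw : gen_alg (carleman_gens lam x0 t0 beta v) (cweight lam x0 t0 beta))
      by (apply gen_alg_base; now repeat right).
    assert (Ht : gen_alg (carleman_gens lam x0 t0 beta v) (fun t _ => t))
      by (apply gen_alg_base; right; right; now left).
    assert (Hx : gen_alg (carleman_gens lam x0 t0 beta v) (fun _ x => x))
      by (apply gen_alg_base; right; now left).
    split; [apply diff2_cweight|split].
    + rewrite pdt_cweight. unfold lam_psi_t. gen_alg_tac.
    + rewrite pdx_cweight. gen_alg_tac.
Qed.

(* With [S = (X + sg Z)/2 - alpha p w] and [A = alpha wt + (X - sg Z)/2], the right side minus
   the left side is [S^2 + A^2]. *)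
Lemma carleman_square_ge (X Z wt w p alpha sg : R) : sg ^ 2 = 1 ->
  (X ^ 2 - Z ^ 2) / 2 + alpha * (X + sg * Z) * wt - alpha * p * w * (X - sg * Z)
    - 2 * alpha ^ 2 * p * w * wt
  <= (alpha * (wt - p * w) + X) ^ 2.
Proof.
  intros Hsg.
  assert (E : (alpha * (wt - p * w) + X) ^ 2 - ((X ^ 2 - Z ^ 2) / 2 + alpha * (X + sg * Z) * wt
     - alpha * p * w * (X - sg * Z) - 2 * alpha ^ 2 * p * w * wt)
     = ((X + sg * Z) / 2 - alpha * p * w) ^ 2 + (alpha * wt + (X - sg * Z) / 2) ^ 2
       + (1 - sg ^ 2) * Z ^ 2 / 2) by field.
  rewrite Hsg in E.
  pose proof (pow2_ge_0 ((X + sg * Z) / 2 - alpha * p * w)).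
  pose proof (pow2_ge_0 (alpha * wt + (X - sg * Z) / 2)). lra.
Qed.

Lemma pow_m1_sq (n : nat) : ((-1) ^ n) ^ 2 = 1.
Proof.
  rewrite <- pow_mult, Nat.mul_comm, pow_mult. replace ((-1) ^ 2) with 1 by ring. apply pow1.
Qed.

(* The coefficient of [|d_x^m w|^2] produced by the argument; the [m = 0] term absorbs the
   time integration by parts. *)
Definition carleman_coef (n m : nat) (x0 alpha beta lam x : R) : R :=
  1/2 * (weight n m (- (2 * lam)) x0 x - weight n m (2 * lam) x0 x)
  - (if (m =? 0)%nat then 2 * alpha ^ 2 * lam * beta else 0).

Section Carleman_estimate.
Variables (T L alpha x0 t0 beta lam : R) (n : nat) (v : R -> R -> R) (a b c d : R).
Hypotheses (HT : 0 < T) (HL : 0 < L) (Hv : smooth2 v) (Ha : 0 < a) (Hb : b < T)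
  (Hc : 0 < c) (Hd : d < L) (Hsupp : supported_in a b c d v).

Local Notation G := (carleman_gens lam x0 t0 beta v).
Local Notation w := (fun t x => cweight lam x0 t0 beta t x * v t x).
Local Notation X := (cdxn x0 (- (2 * lam)) n w).
Local Notation Z := (cdxn x0 (2 * lam) n w).

Let HG : pd_stable G := pd_stable_carleman_gens lam x0 t0 beta v Hv.

Let Hx : gen_alg G (fun _ x => x).
Proof. apply gen_alg_base; right; now left. Qed.

Let Hw : gen_alg G w.
Proof. apply gen_alg_mult; apply gen_alg_base; [now repeat right|left; now exists nil]. Qed.

Let Sw : supported_in a b c d w.
Proof. now apply supported_in_mult_l. Qed.

Lemma conjugated_operator (t x : R) :
  exp (2 * lam * psi x0 t0 beta t x) * (alpha * pdt v t x + pdxn n v t x) ^ 2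
  = (alpha * (pdt w t x - lam_psi_t lam t0 beta t * w t x) + X t x) ^ 2.
Proof.
  set (E := cweight lam x0 t0 beta t x).
  assert (Ht : pdt w t x = E * lam_psi_t lam t0 beta t * v t x + E * pdt v t x).
  { unfold pdt. rewrite (Derive_mult (fun s => cweight lam x0 t0 beta s x) (fun s => v s x)).
    - change (Derive (fun s => cweight lam x0 t0 beta s x) t) with (pdt (cweight lam x0 t0 beta) t x).
      now rewrite pdt_cweight.
    - exact (proj1 (diff2_cweight lam x0 t0 beta t x)).
    - exact (proj1 (Hv nil t x)). }
  set (e := fun z => exp (- (lam * psi x0 t0 beta t z))).
  assert (He : forall y, is_derive e y (- (2 * lam * (y - x0)) * e y)).
  { intros y. unfold e, psi. auto_derive; auto.
    match goal with |- context [exp ?A] => replace (exp A)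
      with (exp (- (lam * ((y - x0) ^ 2 - beta * (t - t0) ^ 2)))) by (f_equal; ring) end.
    ring. }
  assert (Hx' : E * pdxn n v t x = X t x).
  { rewrite (cdxn_xjet G) by auto.
    unfold pdxn. rewrite (Derive_n_ext (fun y => v t y) (fun z => e z * xjet w t 0%nat z)).
    - rewrite (Derive_n_mult_exp x0 (2 * lam) e) by (auto; now apply is_jet_xjet, (gen_alg_smooth2 G)).
      unfold E, e, cweight. rewrite <- Rmult_assoc, <- exp_plus, Rplus_opp_r, exp_0. ring.
    - intros z. unfold xjet, e, cweight. simpl.
      rewrite <- Rmult_assoc, <- exp_plus, Rplus_opp_l, exp_0. ring. }
  assert (Hexp : exp (2 * lam * psi x0 t0 beta t x) = E ^ 2).
  { unfold E, cweight. simpl. rewrite Rmult_1_r, <- exp_plus. f_equal. ring. }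
  rewrite Hexp, Ht, <- Hx'. fold E. ring.
Qed.

Let cw (t x : R) : continuous (fun y => w t y) x.
Proof. exact (gen_alg_continuous_x G HG w t x Hw). Qed.

Let cwt (t x : R) : continuous (fun y => pdt w t y) x.
Proof. exact (gen_alg_continuous_x G HG (pdt w) t x (gen_alg_pdt G HG w Hw)). Qed.

Let Hjet (F : R -> R -> R) (t : R) : gen_alg G F -> supported_in a b c d F -> null_jet L (xjet F t).
Proof. intros HF HS. apply (null_jet_xjet L a b c d); auto. now apply (gen_alg_smooth2 G). Qed.

Lemma RInt_x_cdxn_sq (s t : R) :
  RInt (fun x => cdxn x0 s n w t x ^ 2) 0 L = sum_f_R0 (fun m => wsq L (weight n m s x0) (xjet w t) m) n.
Proof.
  rewrite <- wsq_cdxn_jet by (lra || auto).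
  apply RInt_ext_R. intros x. now rewrite (cdxn_xjet G).
Qed.

Lemma RInt_x_w_X (t : R) :
  RInt (fun x => w t x * X t x) 0 L = (-1) ^ n * RInt (fun x => w t x * Z t x) 0 L.
Proof.
  rewrite (RInt_ext_R _ (fun x => xjet w t 0%nat x * cdxn_jet x0 (- (2 * lam)) n (xjet w t) 0%nat x))
    by (intros; now rewrite (cdxn_xjet G)).
  rewrite int_cdxn_jet_adjoint, Ropp_involutive by auto.
  f_equal. apply RInt_ext_R. intros. rewrite (cdxn_xjet G) by auto. apply Rmult_comm.
Qed.

Lemma RInt_x_pdt_w_X (t : R) :
  RInt (fun x => pdt (fun t x => w t x * X t x) t x) 0 L
  = RInt (fun x => X t x * pdt w t x) 0 L + (-1) ^ n * RInt (fun x => Z t x * pdt w t x) 0 L.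
Proof.
  assert (Hwt : gen_alg G (pdt w)) by now apply gen_alg_pdt.
  assert (HX : gen_alg G X) by now apply gen_alg_cdxn.
  rewrite (RInt_ext_R _ (fun x => X t x * pdt w t x
      + xjet w t 0%nat x * cdxn_jet x0 (- (2 * lam)) n (xjet (pdt w) t) 0%nat x)).
  - rewrite RInt_plus_R.
    + rewrite int_cdxn_jet_adjoint, Ropp_involutive
        by (auto; apply Hjet; auto; now apply supported_in_pdt).
      do 2 f_equal. apply RInt_ext_R. intros. now rewrite (cdxn_xjet G).
    + apply ex_RInt_cont. intros; cont; now apply (gen_alg_continuous_x G).
    + apply (ex_RInt_ext (fun x => w t x * cdxn x0 (- (2 * lam)) n (pdt w) t x)).
      * intros. now rewrite (cdxn_xjet G).
      * apply ex_RInt_cont. intros. apply continuous_mult_R; auto.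
        apply (gen_alg_continuous_x G); auto. now apply gen_alg_cdxn.
  - intros x. unfold pdt at 1. rewrite (Derive_mult (fun s => w s x) (fun s => X s x)).
    + change (Derive (fun s => X s x) t) with (pdt X t x).
      rewrite (pdt_cdxn G), (cdxn_xjet G x0 _ HG Hx n (pdt w)) by auto.
      change (xjet w t 0%nat x) with (w t x). unfold pdt. cbv beta. ring.
    + exact (proj1 (gen_alg_diff2 G HG w Hw t x)).
    + exact (proj1 (gen_alg_diff2 G HG X HX t x)).
Qed.

Lemma RInt_x_pdt_w_sq (t : R) :
  RInt (fun x => pdt (fun t x => w t x * w t x) t x) 0 L = 2 * RInt (fun x => w t x * pdt w t x) 0 L.
Proof.
  assert (Hwt : gen_alg G (pdt w)) by now apply gen_alg_pdt.
  rewrite <- RInt_scal_R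
    by (apply ex_RInt_cont; intros; apply continuous_mult_R; [apply cw|apply cwt]).
  apply RInt_ext_R. intros x. unfold pdt at 1.
  rewrite (Derive_mult (fun s => w s x) (fun s => w s x))
    by exact (proj1 (gen_alg_diff2 G HG w Hw t x)).
  fold (pdt w t x). ring.
Qed.

Definition carleman_form (p t x : R) : R :=
  (X t x ^ 2 - Z t x ^ 2) / 2 + alpha * (X t x + (-1) ^ n * Z t x) * pdt w t x
  - alpha * p * w t x * (X t x - (-1) ^ n * Z t x) - 2 * alpha ^ 2 * p * w t x * pdt w t x.

Lemma RInt_x_carleman_form (t p : R) :
  RInt (fun x => carleman_form p t x) 0 L
  = 1/2 * sum_f_R0 (fun m => wsq L (fun x => weight n m (- (2 * lam)) x0 x - weight n m (2 * lam) x0 x)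
                      (xjet w t) m) n
    + alpha * RInt (fun x => pdt (fun t x => w t x * X t x) t x) 0 L
    - alpha ^ 2 * p * RInt (fun x => pdt (fun t x => w t x * w t x) t x) 0 L.
Proof.
  unfold carleman_form. set (sg := (-1) ^ n).
  assert (cX : forall x, continuous (fun y => X t y) x)
    by (intros; apply (gen_alg_continuous_x G); auto; now apply gen_alg_cdxn).
  assert (cZ : forall x, continuous (fun y => Z t y) x)
    by (intros; apply (gen_alg_continuous_x G); auto; now apply gen_alg_cdxn).
  assert (Hu : is_jet (xjet w t)) by (apply is_jet_xjet, (gen_alg_smooth2 G); auto).
  assert (Hdiff : forall m, wsq L (fun x => weight n m (- (2 * lam)) x0 x - weight n m (2 * lam) x0 x)
      (xjet w t) m = wsq L (weight n m (- (2 * lam)) x0) (xjet w t) m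
                     - wsq L (weight n m (2 * lam) x0) (xjet w t) m).
  { intros m. unfold wsq. rewrite <- RInt_minus_R.
    - apply RInt_ext_R. intros; ring.
    - apply ex_RInt_cont. intros; cont; auto using continuous_weight, is_jet_continuous.
    - apply ex_RInt_cont. intros; cont; auto using continuous_weight, is_jet_continuous. }
  rewrite (sum_eq _ _ _ (fun m _ => Hdiff m)), minus_sum, <- !RInt_x_cdxn_sq.
  rewrite RInt_x_pdt_w_X, RInt_x_pdt_w_sq. fold sg.
  rewrite (RInt_ext_R _ (fun x => 1/2 * X t x ^ 2 - 1/2 * Z t x ^ 2 + alpha * (X t x * pdt w t x)
     + (alpha * sg) * (Z t x * pdt w t x) - (alpha * p) * (w t x * X t x)
     + (alpha * p * sg) * (w t x * Z t x) - (2 * alpha ^ 2 * p) * (w t x * pdt w t x))) by (intros; field).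
  transitivity (1/2 * RInt (fun x => X t x ^ 2) 0 L - 1/2 * RInt (fun x => Z t x ^ 2) 0 L
     + alpha * RInt (fun x => X t x * pdt w t x) 0 L + (alpha * sg) * RInt (fun x => Z t x * pdt w t x) 0 L
     - (alpha * p) * RInt (fun x => w t x * X t x) 0 L + (alpha * p * sg) * RInt (fun x => w t x * Z t x) 0 L
     - (2 * alpha ^ 2 * p) * RInt (fun x => w t x * pdt w t x) 0 L).
  - apply is_RInt_unique.
    repeat match goal with
    | |- is_RInt (fun y => _ + _) _ _ (_ + _) => apply is_RInt_plus_R
    | |- is_RInt (fun y => _ - _) _ _ (_ - _) => apply is_RInt_minus_R
    | |- is_RInt (fun y => _ * _) _ _ (_ * RInt _ _ _) => apply is_RInt_scal_R
    | |- is_RInt _ _ _ (RInt _ _ _) => apply is_RInt_RInt_R, ex_RInt_cont; intros;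
        first [apply continuous_pow_R | apply continuous_mult_R]; auto
    end.
  - (* the [w X] and [w Z] integrals cancel *)
    cbv beta. rewrite RInt_x_w_X. fold sg. change_eq_R. ring.
Qed.

Local Notation J m t :=
  (wsq L (fun x => weight n m (- (2 * lam)) x0 x - weight n m (2 * lam) x0 x) (xjet w t) m).

Let ex_RInt_J (m : nat) : ex_RInt (fun t => J m t) 0 T.
Proof.
  apply (ex_RInt_ext (fun t => RInt (fun x => (fun t x =>
    (weight n m (- (2 * lam)) x0 x - weight n m (2 * lam) x0 x) * pdword (repeat false m) w t x ^ 2) t x) 0 L)).
  - intros t _. apply RInt_ext_R. intros x. now rewrite xjet_pdword.
  - apply (ex_RInt_RInt_x G L HG). gen_alg_tac. now apply gen_alg_pdword.
Qed.

Let w_t0 (t x : R) : t = 0 \/ t = T -> w t x = 0.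
Proof. intros Ht. apply Sw. lra. Qed.

Lemma RInt_tx_carleman_form :
  RInt (fun t => RInt (fun x => carleman_form (lam_psi_t lam t0 beta t) t x) 0 L) 0 T
  = 1/2 * sum_f_R0 (fun m => RInt (fun t => J m t) 0 T) n
    - 2 * alpha ^ 2 * lam * beta * RInt (fun t => RInt (fun x => w t x * w t x) 0 L) 0 T.
Proof.
  assert (HwX : gen_alg G (fun t x => w t x * X t x)) by (apply gen_alg_mult; auto using gen_alg_cdxn).
  assert (Hww : gen_alg G (fun t x => w t x * w t x)) by now apply gen_alg_mult.
  rewrite (RInt_ext_R _ _ _ _ (fun t => RInt_x_carleman_form t (lam_psi_t lam t0 beta t))).
  transitivity (1/2 * RInt (fun t => sum_f_R0 (fun m => J m t) n) 0 T
    + alpha * RInt (fun t => RInt (fun x => pdt (fun t x => w t x * X t x) t x) 0 L) 0 T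
    - alpha ^ 2 * RInt (fun t => lam_psi_t lam t0 beta t
                         * RInt (fun x => pdt (fun t x => w t x * w t x) t x) 0 L) 0 T).
  - apply is_RInt_unique.
    apply (is_RInt_ext (fun t => 1/2 * sum_f_R0 (fun m => J m t) n
      + alpha * RInt (fun x => pdt (fun t x => w t x * X t x) t x) 0 L
      - alpha ^ 2 * (lam_psi_t lam t0 beta t * RInt (fun x => pdt (fun t x => w t x * w t x) t x) 0 L)));
      [intros; change_eq_R; ring|].
    apply is_RInt_minus_R; [apply is_RInt_plus_R|]; apply is_RInt_scal_R, is_RInt_RInt_R.
    + now apply ex_RInt_sum_f_R0.
    + apply (ex_RInt_RInt_x G L HG). now apply gen_alg_pdt.
    + apply ex_RInt_cont. intros. apply continuous_mult_R.
      * unfold lam_psi_t. cont.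
      * exact (continuous_RInt_x G L HG _ _ (gen_alg_pdt G HG _ Hww)).
  - rewrite RInt_sum_f_R0, (RInt_pdt_RInt_x_null G), (RInt_mult_pdt_RInt_x G L HG _ (- 2 * lam * beta))
      by (auto; lra || (intros; apply w_t0; auto) || (intros; rewrite w_t0 by auto; ring)
          || (intros; unfold lam_psi_t; auto_derive; auto; ring)).
    change_eq_R. ring.
Qed.

Lemma dint_carleman_coef_sum : (1 <= n)%nat ->
  sum_f_R0 (fun m => dint T L (fun t x => carleman_coef n m x0 alpha beta lam x * pdxn m w t x ^ 2)) (n - 1)
  = 1/2 * sum_f_R0 (fun m => RInt (fun t => J m t) 0 T) n
    - 2 * alpha ^ 2 * lam * beta * RInt (fun t => RInt (fun x => w t x * w t x) 0 L) 0 T.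
Proof.
  intros Hn.
  set (k := 2 * alpha ^ 2 * lam * beta).
  set (K := RInt (fun t => RInt (fun x => w t x * w t x) 0 L) 0 T).
  assert (Hterm : forall m, dint T L (fun t x => carleman_coef n m x0 alpha beta lam x * pdxn m w t x ^ 2)
    = 1/2 * RInt (fun t => J m t) 0 T - (if (m =? 0)%nat then k * K else 0)).
  { intros m. unfold dint, carleman_coef. fold k.
    set (e := if (m =? 0)%nat then k else 0).
    assert (Hu : forall t x, continuous (xjet w t m) x)
      by (intros; apply is_jet_continuous, is_jet_xjet, (gen_alg_smooth2 G); auto).
    assert (exU : ex_RInt (fun t => RInt (fun x => xjet w t m x ^ 2) 0 L) 0 T).
    { apply (ex_RInt_ext (fun t => RInt (fun x => (fun t x => pdword (repeat false m) w t x ^ 2) t x) 0 L)).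
      - intros t _. apply RInt_ext_R. intros x. now rewrite xjet_pdword.
      - apply (ex_RInt_RInt_x G L HG). gen_alg_tac. now apply gen_alg_pdword. }
    transitivity (RInt (fun t => 1/2 * J m t - e * RInt (fun x => xjet w t m x ^ 2) 0 L) 0 T).
    - apply RInt_ext_R; intros t. unfold wsq. rewrite <- RInt_scal_R, <- RInt_scal_R, <- RInt_minus_R.
      + apply RInt_ext_R. intros x. unfold pdxn, xjet. ring.
      + apply ex_RInt_cont. intros; cont; auto using continuous_weight.
      + apply ex_RInt_cont. intros; cont; auto using continuous_weight.
      + apply ex_RInt_cont. intros; cont; auto using continuous_weight.
      + apply ex_RInt_cont. intros; cont; auto using continuous_weight.
    - rewrite RInt_minus_R, !RInt_scal_R by (auto || apply ex_RInt_scal_R; auto).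
      subst e K. destruct (Nat.eqb_spec m 0) as [->|Hm]; change_eq_R; [|ring].
      do 2 f_equal. apply RInt_ext_R. intros t. apply RInt_ext_R. intros x. unfold xjet. simpl. ring. }
  rewrite (sum_eq _ _ _ (fun m _ => Hterm m)).
  assert (Hsplit : forall N, sum_f_R0 (fun m => 1/2 * RInt (fun t => J m t) 0 T
      - (if (m =? 0)%nat then k * K else 0)) N = 1/2 * sum_f_R0 (fun m => RInt (fun t => J m t) 0 T) N - k * K).
  { induction N; simpl; [ring|rewrite IHN; ring]. }
  rewrite Hsplit.
  (* the weight of [|d_x^n w|^2] is [1] for both signs of [s], so that term cancels *)
  rewrite (sum_N_predN (fun m => RInt (fun t => J m t) 0 T) n) by lia.
  replace (pred n) with (n - 1)%nat by lia.
  rewrite (RInt_eq0 (fun t => J n t)); [ring|].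
  intros t. apply wsq_eq0. intros x. unfold weight. rewrite !wpoly_diag. ring.
Qed.

Lemma carleman_ineq : (1 <= n)%nat ->
  sum_f_R0 (fun m => dint T L (fun t x => carleman_coef n m x0 alpha beta lam x * pdxn m w t x ^ 2)) (n - 1)
  <= dint T L (fun t x => exp (2 * lam * psi x0 t0 beta t x) * (alpha * pdt v t x + pdxn n v t x) ^ 2).
Proof.
  intros Hn. rewrite dint_carleman_coef_sum, <- RInt_tx_carleman_form by auto.
  assert (HX : gen_alg G X) by now apply gen_alg_cdxn.
  assert (HZ : gen_alg G Z) by now apply gen_alg_cdxn.
  assert (Hwt : gen_alg G (pdt w)) by now apply gen_alg_pdt.
  assert (Ht : gen_alg G (fun t _ => t)) by (apply gen_alg_base; right; right; now left).
  assert (Hcw : gen_alg G (cweight lam x0 t0 beta)) by (apply gen_alg_base; now repeat right).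
  assert (Hv0 : gen_alg G v) by (apply gen_alg_base; left; now exists nil).
  unfold dint. rewrite (RInt_ext_R (fun t => RInt (fun x => exp (2 * lam * psi x0 t0 beta t x)
      * (alpha * pdt v t x + pdxn n v t x) ^ 2) 0 L)
    (fun t => RInt (fun x => (alpha * (pdt w t x - lam_psi_t lam t0 beta t * w t x) + X t x) ^ 2) 0 L))
    by (intros t; apply RInt_ext_R; intros x; apply conjugated_operator).
  assert (HQ : gen_alg G (fun t x => carleman_form (lam_psi_t lam t0 beta t) t x))
    by (unfold carleman_form, lam_psi_t; gen_alg_tac).
  assert (HP : gen_alg G (fun t x => (alpha * (pdt w t x - lam_psi_t lam t0 beta t * w t x) + X t x) ^ 2))
    by (unfold lam_psi_t; gen_alg_tac).
  apply RInt_le; [lra|exact (ex_RInt_RInt_x G L HG _ T HQ)|exact (ex_RInt_RInt_x G L HG _ T HP)|].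
  intros t _. apply RInt_le; [lra|exact (ex_RInt_x G L HG _ t HQ)|exact (ex_RInt_x G L HG _ t HP)|].
  intros x _. apply carleman_square_ge, pow_m1_sq.
Qed.

End Carleman_estimate.

(** * The remainder *)

Definition main_coef (n m : nat) (x0 x lam : R) : R :=
  INR n ^ 2 * Binomial.C (n - 1) m * lam ^ (2 * n - 2 * m - 1) * psi_x x0 x ^ (2 * n - 2 * m - 2) * psi_xx.

Definition odd_term (n m q : nat) (c y : R) : R :=
  ecoef n m q * (c * y) ^ (2 * (n - m - q)) * (((- c) ^ q - c ^ q) / 2).

Lemma pow_opp_even (a : R) (k : nat) : (- a) ^ (2 * k) = a ^ (2 * k).
Proof. rewrite !pow_mult. f_equal. ring. Qed.

Lemma weight_odd_part (n m : nat) (c x0 x : R) :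
  1/2 * (weight n m (- c) x0 x - weight n m c x0 x) = sum_f_R0 (fun q => odd_term n m q c (x - x0)) n.
Proof.
  unfold weight, wpoly, odd_term. rewrite <- minus_sum, scal_sum. apply sum_eq. intros q _.
  replace (- c * (x - x0)) with (- (c * (x - x0))) by ring. rewrite pow_opp_even. field.
Qed.

Lemma odd_term_1 (n m : nat) (x0 x lam : R) : (m < n)%nat ->
  odd_term n m 1 (2 * lam) (x - x0) = main_coef n m x0 x lam.
Proof.
  intros Hm. unfold odd_term, main_coef, psi_x, psi_xx. rewrite ecoef_q1. unfold binom.
  replace (m <=? n - 1)%nat with true by (symmetry; apply Nat.leb_le; lia).
  replace (2 * (n - m - 1))%nat with (2 * n - 2 * m - 2)%nat by lia.
  replace (2 * n - 2 * m - 1)%nat with (S (2 * n - 2 * m - 2)) by lia.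
  rewrite Rpow_mult_distr, (Rpow_mult_distr 2 (x - x0)), Rpow_mult_distr.
  change (lam ^ S (2 * n - 2 * m - 2)) with (lam * lam ^ (2 * n - 2 * m - 2)). rewrite !pow_1. field.
Qed.

(* Even [q] contribute nothing; odd [q >= 3] carry at most [lam ^ (2 n - 2 m - 3)]. *)
Lemma odd_term_bound (n m q : nat) (lam y x0 : R) : q <> 1%nat -> 1 <= lam -> Rabs y <= x0 ->
  Rabs (odd_term n m q (2 * lam) y)
  <= Rabs (ecoef n m q) * (2 * (1 + x0)) ^ (2 * n) * lam ^ (2 * n - 2 * m - 3).
Proof.
  intros Hq Hl Hy.
  assert (Hx0 : 0 <= x0) by (generalize (Rabs_pos y); lra).
  assert (HM : 0 <= (2 * (1 + x0)) ^ (2 * n)) by (apply pow_le; lra).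
  assert (HL : 0 <= lam ^ (2 * n - 2 * m - 3)) by (apply pow_le; lra).
  destruct (Nat.Even_or_Odd q) as [[k Hk]|[k Hk]].
  - unfold odd_term. subst q. rewrite pow_opp_even, Rminus_diag, Rdiv_0_l, Rmult_0_r, Rabs_R0.
    apply Rmult_le_pos; [apply Rmult_le_pos|]; auto; apply Rabs_pos.
  - destruct (le_lt_dec (m + q) n) as [Hmq|Hmq].
    2:{ unfold odd_term. rewrite ecoef_eq0 by lia. rewrite !Rabs_R0, !Rmult_0_l, Rabs_R0. lra. }
    unfold odd_term. rewrite Hk.
    replace ((- (2 * lam)) ^ (2 * k + 1) - (2 * lam) ^ (2 * k + 1)) with (- 2 * (2 * lam) ^ (2 * k + 1))
      by (rewrite !pow_add, pow_opp_even; simpl; ring).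
    rewrite <- Hk. replace (- 2 * (2 * lam) ^ q / 2) with (- (2 * lam) ^ q) by field.
    rewrite !Rabs_mult, Rabs_Ropp, <- !RPow_abs, !Rmult_assoc.
    apply Rmult_le_compat_l; [apply Rabs_pos|].
    replace (Rabs (2 * (lam * y))) with (2 * Rabs y * lam)
      by (rewrite !Rabs_mult, (Rabs_right 2), (Rabs_right lam) by lra; ring).
    rewrite (Rabs_right (2 * lam)) by lra.
    replace ((2 * Rabs y * lam) ^ (2 * (n - m - q)) * (2 * lam) ^ q)
      with (((2 * Rabs y) ^ (2 * (n - m - q)) * 2 ^ q) * lam ^ (2 * (n - m - q) + q))
      by (rewrite pow_add, !Rpow_mult_distr; ring).
    apply Rmult_le_compat; [apply Rmult_le_pos; apply pow_le; generalize (Rabs_pos y); lra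
                           |apply pow_le; lra| |apply Rle_pow; [lra|lia]].
    apply Rle_trans with ((2 * (1 + x0)) ^ (2 * (n - m - q)) * (2 * (1 + x0)) ^ q).
    + apply Rmult_le_compat; try (apply pow_le; generalize (Rabs_pos y); lra);
        apply pow_incr; generalize (Rabs_pos y); lra.
    + rewrite <- pow_add. apply Rle_pow; [lra|lia].
Qed.

Definition ecoef_mass (n : nat) : R := sum_f_R0 (fun m => sum_f_R0 (fun q => Rabs (ecoef n m q)) n) n.

Definition remainder_const (n : nat) (x0 alpha beta : R) : R :=
  (2 * (1 + x0)) ^ (2 * n) * ecoef_mass n + 2 * alpha ^ 2 * beta + 1.

Lemma ecoef_mass_ge0 (n : nat) : 0 <= ecoef_mass n.
Proof. apply cond_pos_sum; intros; apply cond_pos_sum; intros; apply Rabs_pos. Qed.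

Lemma remainder_const_pos (n : nat) (x0 alpha beta : R) : 0 <= x0 -> 0 <= beta ->
  0 < remainder_const n x0 alpha beta.
Proof.
  intros Hx0 Hb. unfold remainder_const.
  assert (0 <= (2 * (1 + x0)) ^ (2 * n)) by (apply pow_le; lra).
  pose proof (ecoef_mass_ge0 n). pose proof (pow2_ge_0 alpha). nra.
Qed.

Lemma sum_f_R0_drop1 (f : nat -> R) (N : nat) : (1 <= N)%nat ->
  sum_f_R0 f N - f 1%nat = sum_f_R0 (fun q => if (q =? 1)%nat then 0 else f q) N.
Proof.
  induction 1 as [|N HN IH]; [simpl; ring|].
  simpl sum_f_R0 at 1 2. rewrite <- IH. replace (N =? 0)%nat with false by (symmetry; apply Nat.eqb_neq; lia).
  ring.
Qed.

Lemma sum_f_R0_term_le (f : nat -> R) (N i : nat) : (forall j, 0 <= f j) -> (i <= N)%nat -> f i <= sum_f_R0 f N.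
Proof.
  intros Hf. induction 1 as [|N HN IH]; simpl.
  - destruct i; simpl; [lra|]. pose proof (cond_pos_sum f i Hf). lra.
  - specialize (Hf (S N)). lra.
Qed.

Lemma odd_terms_bound (n m : nat) (lam y x0 : R) : (m <= n)%nat -> 1 <= lam -> Rabs y <= x0 ->
  Rabs (sum_f_R0 (fun q => if (q =? 1)%nat then 0 else odd_term n m q (2 * lam) y) n)
  <= (2 * (1 + x0)) ^ (2 * n) * ecoef_mass n * lam ^ (2 * n - 2 * m - 3).
Proof.
  intros Hm Hl Hy.
  set (M := (2 * (1 + x0)) ^ (2 * n) * lam ^ (2 * n - 2 * m - 3)).
  assert (HM : 0 <= M) by (apply Rmult_le_pos; apply pow_le; generalize (Rabs_pos y); lra).
  eapply Rle_trans; [apply sum_f_R0_triangle|].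
  apply Rle_trans with (sum_f_R0 (fun q => Rabs (ecoef n m q)) n * M).
  - rewrite (Rmult_comm _ M), scal_sum. apply sum_Rle. intros q _. unfold M.
    destruct (Nat.eqb_spec q 1) as [->|Hq1].
    + rewrite Rabs_R0. apply Rmult_le_pos; [apply Rabs_pos|exact HM].
    + rewrite <- Rmult_assoc. now apply odd_term_bound.
  - replace ((2 * (1 + x0)) ^ (2 * n) * ecoef_mass n * lam ^ (2 * n - 2 * m - 3))
      with (ecoef_mass n * M) by (unfold M; ring).
    apply Rmult_le_compat_r; [exact HM|].
    apply (sum_f_R0_term_le (fun m => sum_f_R0 (fun q => Rabs (ecoef n m q)) n)); [|exact Hm].
    intros; apply cond_pos_sum; intros; apply Rabs_pos.
Qed.

Lemma remainder_bound (n m : nat) (x0 x lam alpha beta : R) : (2 <= n)%nat -> (m < n)%nat -> 1 <= lam ->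
  Rabs (x - x0) <= x0 -> 0 <= beta ->
  Rabs (carleman_coef n m x0 alpha beta lam x - main_coef n m x0 x lam)
   <= remainder_const n x0 alpha beta * powerRZ lam (2 * Z.of_nat n - 2 * Z.of_nat m - 3)%Z.
Proof.
  intros Hn Hm Hl Hy Hb.
  assert (Hx0 : 0 <= x0) by (generalize (Rabs_pos (x - x0)); lra).
  assert (E : carleman_coef n m x0 alpha beta lam x - main_coef n m x0 x lam =
     sum_f_R0 (fun q => if (q =? 1)%nat then 0 else odd_term n m q (2 * lam) (x - x0)) n
     - (if (m =? 0)%nat then 2 * alpha ^ 2 * lam * beta else 0)).
  { unfold carleman_coef. rewrite weight_odd_part, <- sum_f_R0_drop1, odd_term_1 by lia. ring. }
  rewrite E.
  destruct (Nat.eq_dec m (n - 1)) as [Hm1|Hm1].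
  - (* only [q <= 1] survives in the last weight, so the coefficient is exact *)
    rewrite sum_f_R0_eq0.
    + replace (m =? 0)%nat with false by (symmetry; apply Nat.eqb_neq; lia).
      rewrite Rminus_0_r, Rabs_R0. apply Rmult_le_pos; [|apply powerRZ_le; lra].
      now apply Rlt_le, remainder_const_pos.
    + intros q Hq. destruct (Nat.eqb_spec q 1) as [->|Hq1]; [reflexivity|].
      unfold odd_term. destruct q as [|q]; [simpl; field|]. rewrite ecoef_eq0 by lia. ring.
  - replace (2 * Z.of_nat n - 2 * Z.of_nat m - 3)%Z with (Z.of_nat (2 * n - 2 * m - 3)) by lia.
    rewrite <- pow_powerRZ.
    assert (HlE : lam <= lam ^ (2 * n - 2 * m - 3))
      by (rewrite <- (pow_1 lam) at 1; apply Rle_pow; [lra|lia]).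
    assert (Hsum := odd_terms_bound n m lam (x - x0) x0 ltac:(lia) Hl Hy).
    assert (Hif : Rabs (if (m =? 0)%nat then 2 * alpha ^ 2 * lam * beta else 0)
                  <= 2 * alpha ^ 2 * beta * lam ^ (2 * n - 2 * m - 3)).
    { pose proof (pow2_ge_0 alpha).
      assert (0 <= 2 * alpha ^ 2 * beta) by (apply Rmult_le_pos; lra).
      destruct (m =? 0)%nat.
      - rewrite Rabs_right by nra. nra.
      - rewrite Rabs_R0. apply Rmult_le_pos; [lra|apply pow_le; lra]. }
    assert (1 <= lam ^ (2 * n - 2 * m - 3)) by (apply pow_R1_Rle; lra).
    eapply Rle_trans; [apply Rabs_triang|]. rewrite Rabs_Ropp.
    unfold remainder_const. lra.
Qed.

Theorem theorem1p1 (T L alpha : R) (n : nat) (x0 t0 beta : R)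
  (HT : 0 < T) (HL : 0 < L) (Halpha : alpha <> 0) (Hn : (2 <= n)%nat)
  (Hx0 : L < x0) (Ht0 : 0 < t0 < T) (Hbeta : 0 < beta) :
  exists (C : R) (Rm : nat -> R -> R -> R -> R),
    0 < C /\
    (forall m, (m < n)%nat -> forall lam, 1 <= lam ->
       forall t x, continuous (fun p : R * R => Rm m (fst p) (snd p) lam) (t, x)) /\
    (forall m, (m < n)%nat ->
       forall t x lam, 0 <= t <= T -> 0 <= x <= L -> 1 <= lam ->
         Rabs (Rm m t x lam)
           <= C * powerRZ lam (2 * Z.of_nat n - 2 * Z.of_nat m - 3)%Z) /\
    (forall (lam : R) (v : R -> R -> R), 1 <= lam -> Cc_inf T L v ->
       let w := fun t x => exp (lam * psi x0 t0 beta t x) * v t x in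
       sum_f_R0 (fun m =>
         dint T L (fun t x =>
           (INR n ^ 2 * Binomial.C (n - 1) m
              * lam ^ (2 * n - 2 * m - 1)
              * psi_x x0 x ^ (2 * n - 2 * m - 2) * psi_xx
            + Rm m t x lam) * (pdxn m w t x) ^ 2)) (n - 1)
       <= dint T L (fun t x =>
            exp (2 * lam * psi x0 t0 beta t x)
            * (alpha * pdt v t x + pdxn n v t x) ^ 2)).
Proof.
  exists (remainder_const n x0 alpha beta),
    (fun m t x lam => carleman_coef n m x0 alpha beta lam x - main_coef n m x0 x lam).
  split; [|split; [|split]].
  - apply remainder_const_pos; lra.
  - intros m _ lam _ t x.
    apply (continuous_comp (fun p : R * R => snd p)
             (fun y => carleman_coef n m x0 alpha beta lam y - main_coef n m x0 y lam));
      [apply continuous_snd|].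
    unfold carleman_coef, main_coef, psi_x, psi_xx. cont; auto using continuous_weight.
  - intros m Hm t x lam _ Hx Hlam.
    apply remainder_bound; [lia|lia|lra|rewrite Rabs_left by lra; lra|lra].
  - intros lam v Hlam (Hv & a & b & c & d & Ha & _ & Hb & Hc & _ & Hd & Hsupp). cbv zeta.
    rewrite (sum_eq _ (fun m => dint T L (fun t x => carleman_coef n m x0 alpha beta lam x
               * pdxn m (fun t x => cweight lam x0 t0 beta t x * v t x) t x ^ 2))).
    + apply (carleman_ineq T L alpha x0 t0 beta lam n v a b c d); auto; lia.
    + intros m _. apply RInt_ext_R. intros t. apply RInt_ext_R. intros x.
      unfold main_coef, cweight. ring.
Qed.
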